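(* Let $A$ be a complex semisimple Banach algebra with a unit. Then $\mathrm{Soc}(A)$ is infinite-dimensional if and only if every element of $\mathrm{Soc}(A)$ is a topological divisor of zero in the normed algebra $\mathrm{Soc}(A)$ (with the norm inherited from $A$). *)

From Stdlib Require Import Reals.
Open Scope R_scope.

Definition C : Type := (R * R)%type.
Definition C0 : C := (0, 0).
Definition C1 : C := (1, 0).
Definition Cadd (a b : C) : C := (fst a + fst b, snd a + snd b).
Definition Cmul (a b : C) : C :=
  (fst a * fst b - snd a * snd b, fst a * snd b + snd a * fst b).
Definition Cabs (a : C) : R := sqrt (fst a * fst a + snd a * snd a).

Record CBanachAlgebra := {
  car :> Type;
  add : car -> car -> car;
  opp : car -> car;
  zero : car;
  mul : car -> car -> car;
  one : car;
  scal : C -> car -> car;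
  norm : car -> R;
  add_assoc : forall x y z, add x (add y z) = add (add x y) z;
  add_comm : forall x y, add x y = add y x;
  add_zero : forall x, add x zero = x;
  add_opp : forall x, add x (opp x) = zero;
  scal_assoc : forall a b x, scal a (scal b x) = scal (Cmul a b) x;
  scal_one : forall x, scal C1 x = x;
  scal_add_vec : forall a x y, scal a (add x y) = add (scal a x) (scal a y);
  scal_add_scal : forall a b x, scal (Cadd a b) x = add (scal a x) (scal b x);
  mul_assoc : forall x y z, mul x (mul y z) = mul (mul x y) z;
  mul_one_l : forall x, mul one x = x;
  mul_one_r : forall x, mul x one = x;
  mul_add_l : forall x y z, mul (add x y) z = add (mul x z) (mul y z);
  mul_add_r : forall x y z, mul x (add y z) = add (mul x y) (mul x z);
  mul_scal_l : forall a x y, mul (scal a x) y = scal a (mul x y);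
  mul_scal_r : forall a x y, mul x (scal a y) = scal a (mul x y);
  norm_eq0 : forall x, norm x = 0 <-> x = zero;
  norm_triangle : forall x y, norm (add x y) <= norm x + norm y;
  norm_scal : forall a x, norm (scal a x) = Cabs a * norm x;
  norm_mul : forall x y, norm (mul x y) <= norm x * norm y;
  complete : forall u : nat -> car,
    (forall eps, eps > 0 -> exists N, forall m n, (m >= N)%nat -> (n >= N)%nat ->
        norm (add (u m) (opp (u n))) < eps) ->
    exists l, Un_cv (fun n => norm (add (u n) (opp l))) 0
}.

Arguments add {c}. Arguments opp {c}. Arguments zero {c}. Arguments mul {c}.
Arguments one {c}. Arguments scal {c}. Arguments norm {c}.

Section Algebra.
Variable A : CBanachAlgebra.

Fixpoint vsum (v : nat -> A) (n : nat) : A :=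
  match n with
  | O => zero
  | S k => add (vsum v k) (v k)
  end.

Definition left_ideal (I : A -> Prop) : Prop :=
  I zero /\
  (forall x y, I x -> I y -> I (add x y)) /\
  (forall a x, I x -> I (scal a x)) /\
  (forall a x, I x -> I (mul a x)).

Definition maximal_left_ideal (I : A -> Prop) : Prop :=
  left_ideal I /\ ~ I one /\
  (forall J, left_ideal J -> ~ J one -> (forall x, I x -> J x) -> forall x, J x -> I x).

Definition minimal_left_ideal (L : A -> Prop) : Prop :=
  left_ideal L /\ (exists x, L x /\ x <> zero) /\
  (forall J, left_ideal J -> (forall x, J x -> L x) ->
     (forall x, J x -> x = zero) \/ (forall x, L x -> J x)).

Definition rad (x : A) : Prop := forall I, maximal_left_ideal I -> I x.

Definition semisimple : Prop := forall x, rad x -> x = zero.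

(* socle: sum of all minimal left ideals ({0} if there are none) *)
Definition soc (x : A) : Prop :=
  exists (n : nat) (v : nat -> A),
    (forall i, (i < n)%nat -> exists L, minimal_left_ideal L /\ L (v i)) /\
    x = vsum v n.

Definition finite_dimensional (S : A -> Prop) : Prop :=
  exists (n : nat) (v : nat -> A),
    (forall i, (i < n)%nat -> S (v i)) /\
    (forall x, S x -> exists c : nat -> C, x = vsum (fun i => scal (c i) (v i)) n).

Definition infinite_dimensional (S : A -> Prop) : Prop := ~ finite_dimensional S.

Definition topological_divisor_of_zero_in (S : A -> Prop) (x : A) : Prop :=
  exists z : nat -> A, (forall n, S (z n)) /\ (forall n, norm (z n) = 1) /\
    (Un_cv (fun n => norm (mul x (z n))) 0 \/ Un_cv (fun n => norm (mul (z n) x)) 0).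

End Algebra.

(* In a semiprime algebra every minimal left ideal is [Ae] for an idempotent [e] such that
   [eAe] is a division algebra, hence [eAe = Ce] by Gelfand-Mazur.  Gelfand-Mazur is proved
   without complex analysis: if [1 - sx] is invertible for all [s], the averages
   [(1 - (sx)^(2^m))^-1] of the resolvent over roots of unity converge to an idempotent, hence
   to [0] or [1], which depends continuously on [s], equals [1] at [s = 0] and [0] for large [s].
   Consequently [eAe'] has dimension at most one for minimal idempotents [e], [e'], and every
   finite family in the socle has a left and a right unit inside the socle.

   If the socle is finite-dimensional, such units for a spanning family combine into a
   two-sided unit [u] of the socle, and [u z_n = z_n] forbids [u z_n -> 0] for unit vectors
   [z_n].  If it is infinite-dimensional, take a right unit [f] and a left unit [g] of [x] in
   the socle.  Were [w = f w g] for every [w] in the socle, the socle would be spanned by the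
   finitely many lines [y_i (e_i A e'_j)] coming from decompositions of [f] and [g]; so some
   [w - f w] or [w - w g] is nonzero, and it annihilates [x] from one side. *)

From Pilot Require Import Defs.
From Stdlib Require Import Reals Lra Lia Classical ClassicalEpsilon ProofIrrelevance.
From Stdlib Require Ncring Ncring_tac.
From Coquelicot Require Complex Compactness.
Open Scope R_scope.

Arguments add_assoc {c}. Arguments add_comm {c}. Arguments add_zero {c}. Arguments add_opp {c}.
Arguments scal_assoc {c}. Arguments scal_one {c}. Arguments scal_add_vec {c}.
Arguments scal_add_scal {c}. Arguments mul_assoc {c}. Arguments mul_one_l {c}.
Arguments mul_one_r {c}. Arguments mul_add_l {c}. Arguments mul_add_r {c}.
Arguments mul_scal_l {c}. Arguments mul_scal_r {c}. Arguments norm_eq0 {c}.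
Arguments norm_triangle {c}. Arguments norm_scal {c}. Arguments norm_mul {c}.
Arguments complete {c}.

Lemma add_0_l (A : CBanachAlgebra) (x : A) : add zero x = x.
Proof. rewrite add_comm; apply add_zero. Qed.

#[global] Instance ring_ops (A : CBanachAlgebra) :
  @Ncring.Ring_ops A zero one add mul (fun x y => add x (opp y)) opp eq := {}.

#[global] Instance ring_of_algebra (A : CBanachAlgebra) :
  @Ncring.Ring A zero one add mul (fun x y => add x (opp y)) opp eq (ring_ops A).
Proof.
  constructor; try exact _; intros; auto.
  - apply add_0_l. - apply add_comm. - apply add_assoc. - apply mul_one_l.
  - apply mul_one_r. - apply mul_assoc. - apply mul_add_l. - apply mul_add_r.
  - reflexivity. - apply add_opp.
Qed.

Ltac ncring := Ncring_tac.non_commutative_ring.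

Section RingFacts.
Variable A : CBanachAlgebra.
Implicit Types x y z : A.

Lemma mul_0_l x : mul zero x = zero. Proof. ncring. Qed.
Lemma mul_0_r x : mul x zero = zero. Proof. ncring. Qed.
Lemma opp_involutive x : opp (opp x) = x. Proof. ncring. Qed.
Lemma opp_zero : opp (zero : A) = zero. Proof. ncring. Qed.

Lemma sub_eq_0 x y : add x (opp y) = zero -> x = y.
Proof. intro H. transitivity (add (add x (opp y)) y); [ncring|]. rewrite H. ncring. Qed.

Lemma add_self_eq_0 x : add x x = x -> x = zero.
Proof. intro H. transitivity (add (add x x) (opp x)); [ncring|]. rewrite H. ncring. Qed.

Lemma scal_0_l x : scal Defs.C0 x = zero.
Proof.
  apply add_self_eq_0. rewrite <- scal_add_scal. unfold Cadd, Defs.C0; simpl.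
  rewrite Rplus_0_l. reflexivity.
Qed.

Lemma scal_0_r c : scal c (zero : A) = zero.
Proof. apply add_self_eq_0. rewrite <- scal_add_vec, add_zero. reflexivity. Qed.

Lemma scal_m1 x : scal (-1, 0) x = opp x.
Proof.
  transitivity (add (add (scal (-1, 0) x) x) (opp x)); [ncring|].
  rewrite <- (scal_one x) at 2. rewrite <- scal_add_scal.
  replace (Cadd (-1, 0) Defs.C1) with Defs.C0 by (unfold Cadd, Defs.C0, Defs.C1; simpl; f_equal; ring).
  rewrite scal_0_l. ncring.
Qed.

Lemma scal_opp c x : scal c (opp x) = opp (scal c x).
Proof.
  transitivity (add (add (scal c (opp x)) (scal c x)) (opp (scal c x))); [ncring|].
  rewrite <- scal_add_vec. replace (add (opp x) x) with (@zero A) by ncring.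
  rewrite scal_0_r. ncring.
Qed.

Lemma opp_scal c x : opp (scal c x) = scal (Cmul (-1, 0) c) x.
Proof. rewrite <- scal_assoc, scal_m1. reflexivity. Qed.

Lemma norm_zero : norm (zero : A) = 0.
Proof. apply norm_eq0; reflexivity. Qed.

Lemma Cabs_m1 : Cabs (-1, 0) = 1.
Proof. unfold Cabs; simpl. replace (-1 * -1 + 0 * 0) with 1 by ring. apply sqrt_1. Qed.

Lemma norm_opp x : norm (opp x) = norm x.
Proof. rewrite <- scal_m1, norm_scal, Cabs_m1. ring. Qed.

Lemma norm_nonneg x : 0 <= norm x.
Proof.
  pose proof (norm_triangle x (opp x)) as H.
  rewrite add_opp, norm_zero, norm_opp in H. lra.
Qed.

Lemma norm_pos x : x <> zero -> 0 < norm x.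
Proof.
  intro H. destruct (norm_nonneg x) as [|E]; auto.
  symmetry in E. apply norm_eq0 in E. contradiction.
Qed.

Lemma norm_sub_sym x y : norm (add x (opp y)) = norm (add y (opp x)).
Proof. rewrite <- norm_opp. f_equal. ncring. Qed.

Lemma norm_sub_le x y : norm (add x (opp y)) <= norm x + norm y.
Proof. rewrite <- (norm_opp y). apply norm_triangle. Qed.

End RingFacts.

Arguments norm_nonneg {A}. Arguments norm_pos {A}. Arguments norm_sub_sym {A}.
Arguments norm_sub_le {A}.

(** * Minimal left ideals and the socle *)

Definition semiprime (A : CBanachAlgebra) : Prop :=
  forall u : A, (forall a, mul (mul u a) u = zero) -> u = zero.

Definition minimal_idempotent (A : CBanachAlgebra) (e : A) : Prop :=
  mul e e = e /\ e <> zero /\ minimal_left_ideal A (fun z => mul z e = z).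

Section Ideals.
Variable A : CBanachAlgebra.
Implicit Types (x y z a b e m : A) (I J L : A -> Prop).

Lemma left_ideal_zero I : left_ideal A I -> I zero.
Proof. intros [h _]; exact h. Qed.
Lemma left_ideal_add I x y : left_ideal A I -> I x -> I y -> I (add x y).
Proof. intros [_ [h _]]; auto. Qed.
Lemma left_ideal_scal I c x : left_ideal A I -> I x -> I (scal c x).
Proof. intros [_ [_ [h _]]]; auto. Qed.
Lemma left_ideal_mul I a x : left_ideal A I -> I x -> I (mul a x).
Proof. intros [_ [_ [_ h]]]; auto. Qed.
Lemma left_ideal_sub I x y : left_ideal A I -> I x -> I y -> I (add x (opp y)).
Proof.
  intros HI Hx Hy. apply left_ideal_add; auto. rewrite <- scal_m1. apply left_ideal_scal; auto.
Qed.

Definition right_image I m : A -> Prop := fun z => exists l, I l /\ z = mul l m.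

Lemma left_ideal_right_image I m : left_ideal A I -> left_ideal A (right_image I m).
Proof.
  intro HI. split; [|split; [|split]].
  - exists zero. split; [apply left_ideal_zero; auto | symmetry; apply mul_0_l].
  - intros x y [l [Hl ->]] [l' [Hl' ->]]. exists (add l l').
    split; [apply left_ideal_add; auto | symmetry; apply mul_add_l].
  - intros c x [l [Hl ->]]. exists (scal c l).
    split; [apply left_ideal_scal; auto | symmetry; apply mul_scal_l].
  - intros a x [l [Hl ->]]. exists (mul a l).
    split; [apply left_ideal_mul; auto | apply mul_assoc].
Qed.

Lemma left_ideal_full : left_ideal A (fun _ => True).
Proof. repeat split. Qed.

Lemma left_ideal_right_kernel I m : left_ideal A I -> left_ideal A (fun l => I l /\ mul l m = zero).
Proof.
  intro HI. split; [|split; [|split]].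
  - split; [apply left_ideal_zero; auto | apply mul_0_l].
  - intros x y [Hx Ex] [Hy Ey]. split; [apply left_ideal_add; auto|].
    rewrite mul_add_l, Ex, Ey; apply add_zero.
  - intros c x [Hx Ex]. split; [apply left_ideal_scal; auto|].
    rewrite mul_scal_l, Ex; apply scal_0_r.
  - intros a x [Hx Ex]. split; [apply left_ideal_mul; auto|].
    rewrite <- mul_assoc, Ex; apply mul_0_r.
Qed.

Lemma left_ideal_right_preimage I J m : left_ideal A I -> left_ideal A J ->
  left_ideal A (fun l => I l /\ J (mul l m)).
Proof.
  intros HI HJ. split; [|split; [|split]].
  - split; [apply left_ideal_zero|rewrite mul_0_l; apply left_ideal_zero]; auto.
  - intros x y [Hx Kx] [Hy Ky]. split; [apply left_ideal_add; auto|].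
    rewrite mul_add_l. apply left_ideal_add; auto.
  - intros c x [Hx Kx]. split; [apply left_ideal_scal; auto|].
    rewrite mul_scal_l. apply left_ideal_scal; auto.
  - intros a x [Hx Kx]. split; [apply left_ideal_mul; auto|].
    rewrite <- mul_assoc. apply left_ideal_mul; auto.
Qed.

Lemma minimal_left_ideal_ext L L' : minimal_left_ideal A L -> (forall x, L x <-> L' x) ->
  minimal_left_ideal A L'.
Proof.
  intros [[h0 [h1 [h2 h3]]] [[y [Hy Hy0]] Hm]] E.
  split; [split; [|split; [|split]]|split].
  - apply E; auto.
  - intros; apply E, h1; apply E; auto.
  - intros; apply E, h2; apply E; auto.
  - intros; apply E, h3; apply E; auto.
  - exists y; split; auto; apply E; auto.
  - intros J hJ HJ. destruct (Hm J hJ) as [H|H].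
    + intros x Hx. apply E, HJ; auto.
    + left; auto.
    + right. intros x Hx. apply H, E; auto.
Qed.

Lemma minimal_left_ideal_right_image L m : minimal_left_ideal A L ->
  (exists l, L l /\ mul l m <> zero) -> minimal_left_ideal A (right_image L m).
Proof.
  intros [HL [_ Hmin]] [l0 [Hl0 Hl0m]].
  split; [apply left_ideal_right_image; auto|split].
  - exists (mul l0 m). split; auto. exists l0; auto.
  - intros J HJ HJsub.
    destruct (Hmin _ (left_ideal_right_preimage L J m HL HJ)) as [H|H].
    + intros x [Hx _]; exact Hx.
    + left. intros z Jz. destruct (HJsub z Jz) as [l [Hl ->]].
      replace l with (@zero A) by (symmetry; apply H; split; auto). apply mul_0_l.
    + right. intros z [l [Hl ->]]. apply (H l Hl).
Qed.

Lemma semisimple_semiprime : semisimple A -> semiprime A.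
Proof.
  intros hA u Hu. apply hA. intros I [HI [HI1 Hmax]].
  destruct (classic (I u)) as [|Hn]; auto. exfalso.
  set (J := fun z => exists i a, I i /\ z = add i (mul a u)).
  assert (hJ : left_ideal A J).
  { split; [|split; [|split]].
    - exists zero, zero. split. apply left_ideal_zero; auto. ncring.
    - intros x y [i [a [Hi ->]]] [i' [a' [Hi' ->]]]. exists (add i i'), (add a a').
      split. apply left_ideal_add; auto. ncring.
    - intros c x [i [a [Hi ->]]]. exists (scal c i), (scal c a).
      split. apply left_ideal_scal; auto. rewrite scal_add_vec, mul_scal_l. reflexivity.
    - intros b x [i [a [Hi ->]]]. exists (mul b i), (mul b a).
      split. apply left_ideal_mul; auto. ncring. }
  destruct (classic (J one)) as [[i [a [Hi Hone]]]|Hnone].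
  - (* [1 - au] is invertible with inverse [1 + au] since [(au)^2 = a(uau) = 0] *)
    apply HI1.
    replace (@one A) with (mul (add one (mul a u)) i); [apply left_ideal_mul; auto|].
    replace i with (add one (opp (mul a u))) by (rewrite Hone; ncring).
    transitivity (add one (opp (mul a (mul (mul u a) u)))); [ncring|].
    rewrite Hu, mul_0_r, opp_zero, add_zero. reflexivity.
  - apply Hn, (Hmax J hJ Hnone).
    + intros x Hx. exists x, zero. split; auto. ncring.
    + exists zero, one. split. apply left_ideal_zero; auto. ncring.
Qed.

Lemma minimal_left_ideal_idempotent L : semiprime A -> minimal_left_ideal A L ->
  exists e, minimal_idempotent A e /\ L e /\ (forall l, L l -> mul l e = l).
Proof.
  intros hSP HL. pose proof HL as [hL [[y0 [Hy0 Hy00]] Hm]].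
  assert (exists a, mul (mul y0 a) y0 <> zero) as [a Ha].
  { apply NNPP. intro H. apply Hy00, hSP. intro a. apply NNPP. intro H'. apply H. eauto. }
  set (m := mul a y0).
  assert (Lm : L m) by (apply left_ideal_mul; auto).
  assert (Hym : mul y0 m <> zero) by (unfold m; rewrite mul_assoc; auto).
  clearbody m.
  assert (Hm0 : m <> zero) by (intro E; apply Hym; rewrite E; apply mul_0_r).
  destruct (Hm _ (left_ideal_right_image L m hL)) as [H|H].
  { intros x [l [Hl ->]]. apply left_ideal_mul; auto. }
  { exfalso. apply Hym, H. exists y0; auto. }
  destruct (H m Lm) as [e [Le Hem]].
  assert (Hee : mul e e = e).
  { destruct (Hm _ (left_ideal_right_kernel L m hL)) as [H2|H2].
    - intros x [Hx _]; auto.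
    - apply sub_eq_0, H2. split. apply left_ideal_sub; auto. apply left_ideal_mul; auto.
      transitivity (add (mul e (mul e m)) (opp (mul e m))); [ncring|].
      rewrite <- Hem, <- Hem. apply add_opp.
    - exfalso. apply Hym, H2; auto. }
  assert (He0 : e <> zero) by (intro E; apply Hm0; rewrite Hem, E; apply mul_0_l).
  assert (HLe : forall l, L l -> mul l e = l).
  { destruct (Hm _ (left_ideal_right_image _ e left_ideal_full)) as [H2|H2].
    - intros x [b [_ ->]]. apply left_ideal_mul; auto.
    - exfalso. apply He0, H2. exists one. split; auto. symmetry; apply mul_one_l.
    - intros l Hl. destruct (H2 l Hl) as [b [_ ->]]. rewrite <- mul_assoc, Hee; auto. }
  exists e. split; [|split]; auto. split; [|split]; auto.
  apply (minimal_left_ideal_ext L); auto. intro x; split; intro Hx.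
  - apply HLe; auto.
  - rewrite <- Hx. apply left_ideal_mul; auto.
Qed.

End Ideals.
Section Socle.
Variable A : CBanachAlgebra.
Implicit Types x y z a : A.

Lemma vsum_ext (v w : nat -> A) n :
  (forall i, (i < n)%nat -> v i = w i) -> vsum A v n = vsum A w n.
Proof. induction n; simpl; intros; auto. rewrite IHn, H; auto. Qed.

Lemma mul_vsum_l a (v : nat -> A) n : mul a (vsum A v n) = vsum A (fun i => mul a (v i)) n.
Proof. induction n; simpl. apply mul_0_r. rewrite mul_add_r, IHn; auto. Qed.

Lemma mul_vsum_r a (v : nat -> A) n : mul (vsum A v n) a = vsum A (fun i => mul (v i) a) n.
Proof. induction n; simpl. apply mul_0_l. rewrite mul_add_l, IHn; auto. Qed.

Lemma scal_vsum c (v : nat -> A) n : scal c (vsum A v n) = vsum A (fun i => scal c (v i)) n.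
Proof. induction n; simpl. apply scal_0_r. rewrite scal_add_vec, IHn; auto. Qed.

Lemma vsum_add (v w : nat -> A) n :
  vsum A (fun i => add (v i) (w i)) n = add (vsum A v n) (vsum A w n).
Proof. induction n; simpl. ncring. rewrite IHn. ncring. Qed.

Lemma vsum_split (v : nat -> A) n m :
  vsum A v (n + m) = add (vsum A v n) (vsum A (fun j => v (n + j)%nat) m).
Proof.
  induction m; simpl.
  - rewrite Nat.add_0_r. ncring.
  - rewrite Nat.add_succ_r. simpl. rewrite IHm. ncring.
Qed.

Lemma soc_zero : soc A zero.
Proof. exists O, (fun _ => zero). split; [intros; lia | reflexivity]. Qed.

Lemma soc_add x y : soc A x -> soc A y -> soc A (add x y).
Proof.
  intros [n [v [Hv ->]]] [m [w [Hw ->]]].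
  exists (n + m)%nat, (fun i => if Nat.ltb i n then v i else w (i - n)%nat). split.
  - intros i Hi. destruct (Nat.ltb_spec i n); [apply Hv | apply Hw]; lia.
  - rewrite vsum_split. f_equal.
    + apply vsum_ext. intros i Hi. destruct (Nat.ltb_spec i n); [auto | lia].
    + apply vsum_ext. intros j Hj. destruct (Nat.ltb_spec (n + j) n); [lia|]. f_equal; lia.
Qed.

Lemma soc_mul a x : soc A x -> soc A (mul a x).
Proof.
  intros [n [v [Hv ->]]]. exists n, (fun i => mul a (v i)). split.
  - intros i Hi. destruct (Hv i Hi) as [L [HL HLv]].
    exists L. split; auto. apply left_ideal_mul; auto. apply HL.
  - apply mul_vsum_l.
Qed.

Lemma soc_scal c x : soc A x -> soc A (scal c x).
Proof.
  intros [n [v [Hv ->]]]. exists n, (fun i => scal c (v i)). split.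
  - intros i Hi. destruct (Hv i Hi) as [L [HL HLv]].
    exists L. split; auto. apply left_ideal_scal; auto. apply HL.
  - apply scal_vsum.
Qed.

Lemma soc_sub x y : soc A x -> soc A y -> soc A (add x (opp y)).
Proof. intros. apply soc_add; auto. rewrite <- scal_m1. apply soc_scal; auto. Qed.

Lemma soc_minimal L y : minimal_left_ideal A L -> L y -> soc A y.
Proof.
  intros HL Hy. exists 1%nat, (fun _ => y). split.
  - intros i Hi. exists L; auto.
  - simpl. symmetry; apply add_0_l.
Qed.

End Socle.

Definition opposite (A : CBanachAlgebra) : CBanachAlgebra.
Proof.
  refine {| car := car A; add := @add A; opp := @opp A; zero := @zero A;
            mul := fun x y => @mul A y x; one := @one A; scal := @scal A; norm := @norm A |}.
  - apply add_assoc. - apply add_comm. - apply add_zero. - apply add_opp.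
  - apply scal_assoc. - apply scal_one. - apply scal_add_vec. - apply scal_add_scal.
  - intros; symmetry; apply mul_assoc. - apply mul_one_r. - apply mul_one_l.
  - intros; apply mul_add_r. - intros; apply mul_add_l.
  - intros; apply mul_scal_r. - intros; apply mul_scal_l.
  - apply norm_eq0. - apply norm_triangle. - apply norm_scal.
  - intros; rewrite Rmult_comm; apply norm_mul.
  - apply complete.
Defined.

Lemma semiprime_opposite (A : CBanachAlgebra) : semiprime A -> semiprime (opposite A).
Proof. intros H u Hu. apply H. intro a. simpl in Hu. rewrite <- mul_assoc. apply Hu. Qed.

Section MinimalIdempotent.
Variable A : CBanachAlgebra.
Variable e : A.
Hypothesis He : minimal_idempotent A e.
Implicit Types b c t : A.

Lemma minimal_idempotent_left_inv b : mul e b = b -> mul b e = b -> b <> zero ->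
  exists c, mul e c = c /\ mul c e = c /\ mul c b = e.
Proof.
  destruct He as [Hee [He0 [hPe [_ Hmin]]]]. intros Heb Hbe Hb0.
  destruct (Hmin _ (left_ideal_right_image A _ b (left_ideal_full A))) as [H|H].
  - intros x [a [_ ->]]. rewrite <- mul_assoc, Hbe; auto.
  - exfalso. apply Hb0, H. exists one. split; auto. symmetry; apply mul_one_l.
  - destruct (H e Hee) as [d [_ Hd]].
    exists (mul e (mul d e)). split; [|split].
    + rewrite mul_assoc, Hee; auto.
    + rewrite <- !mul_assoc, Hee; auto.
    + rewrite <- !mul_assoc, Heb, <- Hd; auto.
Qed.

Lemma minimal_idempotent_corner_inv b : mul e b = b -> mul b e = b -> b <> zero ->
  exists c, mul e c = c /\ mul c e = c /\ mul c b = e /\ mul b c = e.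
Proof.
  intros Heb Hbe Hb0. destruct (minimal_idempotent_left_inv b) as [c [Hec [Hce Hcb]]]; auto.
  assert (Hc0 : c <> zero).
  { intro E. rewrite E, mul_0_l in Hcb. destruct He as [_ [He0 _]]; auto. }
  destruct (minimal_idempotent_left_inv c) as [c' [Hec' [Hce' Hcc']]]; auto.
  exists c. repeat split; auto.
  replace b with c'; auto. rewrite <- Hce', <- Hcb, mul_assoc, Hcc'; auto.
Qed.

Lemma minimal_idempotent_right_unit t : semiprime A -> mul e t = t -> t <> zero ->
  exists s, mul t s = e.
Proof.
  intros hSP Het Ht0. pose proof He as [Hee _].
  assert (exists a, mul t (mul a e) <> zero) as [a Ha].
  { apply NNPP. intro H. apply Ht0, hSP. intro a.
    rewrite <- Het at 2. rewrite mul_assoc.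
    replace (mul (mul t a) e) with (@zero A); [apply mul_0_l|].
    symmetry. apply NNPP. intro H'. apply H. exists a. rewrite mul_assoc. auto. }
  destruct (minimal_idempotent_corner_inv (mul t (mul a e))) as [c [_ [_ [_ Hbc]]]]; auto.
  - rewrite mul_assoc, Het; auto.
  - rewrite <- !mul_assoc, Hee; auto.
  - exists (mul (mul a e) c). rewrite mul_assoc. auto.
Qed.

(* A right ideal of [A] is a left ideal of [opposite A]. *)
Lemma minimal_right_ideal_principal t : semiprime A -> mul t e = t -> t <> zero ->
  minimal_left_ideal (opposite A) (fun z => exists a, z = mul t a).
Proof.
  intros hSP Hte Ht0. pose proof He as [Hee _].
  split; [split; [|split; [|split]]|split]; simpl.
  - exists zero. symmetry; apply mul_0_r.
  - intros x1 x2 [a1 ->] [a2 ->]. exists (add a1 a2). symmetry; apply mul_add_r.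
  - intros c x1 [a1 ->]. exists (scal c a1). symmetry; apply mul_scal_r.
  - intros a x1 [a1 ->]. exists (mul a1 a). symmetry; apply mul_assoc.
  - exists t. split; auto. exists one. symmetry; apply mul_one_r.
  - intros J hJ HJ. destruct (classic (forall x, J x -> x = zero)) as [H|H]; [left; auto|right].
    apply not_all_ex_not in H. destruct H as [j Hj]. apply imply_to_and in Hj.
    destruct Hj as [Jj Hj0]. destruct (HJ j Jj) as [a ->].
    assert (Hea : mul e a <> zero).
    { intro E. apply Hj0. rewrite <- Hte, <- mul_assoc, E. apply mul_0_r. }
    destruct (minimal_idempotent_right_unit (mul e a)) as [s Hs]; auto.
    { rewrite mul_assoc, Hee; auto. }
    assert (Jt : J t).
    { replace t with (mul (mul t a) s). apply (left_ideal_mul (opposite A) J s _ hJ Jj).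
      rewrite <- Hte at 2. rewrite <- Hs, !mul_assoc, Hte. reflexivity. }
    intros x [b ->]. apply (left_ideal_mul (opposite A) J b t hJ Jt).
Qed.

End MinimalIdempotent.

Lemma soc_opposite (A : CBanachAlgebra) x : semiprime A -> soc A x -> soc (opposite A) x.
Proof.
  intros hSP [n [v [Hv ->]]]. exists n, v. split; [|reflexivity].
  intros i Hi. destruct (Hv i Hi) as [L [HL Lv]].
  destruct (minimal_left_ideal_idempotent A L hSP HL) as [e [HMI [Le HLe]]].
  pose proof HMI as [_ [He0 _]].
  destruct (classic (v i = zero)) as [Hv0|Hv0].
  - exists (fun z => exists a, z = mul e a). split.
    + exact (minimal_right_ideal_principal A e HMI e hSP (proj1 HMI) He0).
    + exists zero. rewrite Hv0. symmetry; apply mul_0_r.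
  - exists (fun z => exists a, z = mul (v i) a). split.
    + exact (minimal_right_ideal_principal A e HMI (v i) hSP (HLe _ Lv) Hv0).
    + exists one. symmetry; apply mul_one_r.
Qed.

Lemma soc_of_opposite (A : CBanachAlgebra) x : semiprime A -> soc (opposite A) x -> soc A x.
Proof. intros hSP. apply (soc_opposite (opposite A) x (semiprime_opposite A hSP)). Qed.

Lemma soc_mul_r (A : CBanachAlgebra) a x : semiprime A -> soc A x -> soc A (mul x a).
Proof.
  intros hSP H. apply soc_of_opposite; auto.
  apply (soc_mul (opposite A) a x). apply soc_opposite; auto.
Qed.
Section LocalUnits.
Variable A : CBanachAlgebra.
Hypothesis hSP : semiprime A.
Implicit Types (x y z w e f : A).

(* [f + e - fe] is the idempotent adjoining [e] to [f] when [ef = 0]. *)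
Lemma mul_idempotent_join w f e :
  mul w (add (add f e) (opp (mul f e))) = add (mul w f) (mul (add w (opp (mul w f))) e).
Proof. ncring. Qed.

Lemma idempotent_join f e : mul f f = f -> mul e e = e -> mul e f = zero ->
  mul (add (add f e) (opp (mul f e))) (add (add f e) (opp (mul f e))) = add (add f e) (opp (mul f e)).
Proof.
  intros Hf He Hef. rewrite mul_idempotent_join.
  replace (mul (add (add f e) (opp (mul f e))) f) with f.
  - replace (mul (add (add (add f e) (opp (mul f e))) (opp f)) e) with (add e (opp (mul f e))); [ncring|].
    transitivity (add (mul e e) (opp (mul f (mul e e)))); [rewrite He; ncring | ncring].
  - transitivity (add (add (mul f f) (mul e f)) (opp (mul f (mul e f)))); [|ncring].
    rewrite Hef, Hf. ncring.
Qed.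

Lemma soc_idempotent_extend f L y : mul f f = f -> soc A f -> minimal_left_ideal A L -> L y ->
  exists f', mul f' f' = f' /\ soc A f' /\ mul y f' = y /\ (forall z, mul z f = z -> mul z f' = z).
Proof.
  intros Hff Hsf HL Hy.
  destruct (classic (forall l, L l -> mul l f = l)) as [Hall|Hn].
  { exists f. repeat split; auto. }
  assert (Hl0 : exists l, L l /\ mul l (add one (opp f)) <> zero).
  { apply not_all_ex_not in Hn. destruct Hn as [l0 Hl0]. apply imply_to_and in Hl0.
    destruct Hl0 as [Ll0 Hl0]. exists l0. split; auto. intro E. apply Hl0.
    symmetry. apply sub_eq_0. rewrite <- E. ncring. }
  set (M := right_image A L (add one (opp f))).
  assert (HM : minimal_left_ideal A M) by (apply minimal_left_ideal_right_image; auto).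
  destruct (minimal_left_ideal_idempotent A M hSP HM) as [e [[Hee _] [Me HMe]]].
  assert (Hef : mul e f = zero).
  { destruct Me as [l1 [_ ->]]. transitivity (mul l1 (add f (opp (mul f f)))); [ncring|].
    rewrite Hff, add_opp. apply mul_0_r. }
  exists (add (add f e) (opp (mul f e))). split; [|split; [|split]].
  - apply idempotent_join; auto.
  - assert (soc A e) by (apply (soc_minimal A M); auto).
    apply soc_sub; [apply soc_add|apply soc_mul]; auto.
  - rewrite mul_idempotent_join, HMe; [ncring|]. exists y. split; auto. ncring.
  - intros z Hz. rewrite mul_idempotent_join, Hz, add_opp, mul_0_l. apply add_zero.
Qed.

Lemma soc_idempotent_extend_soc f x : mul f f = f -> soc A f -> soc A x ->
  exists f', mul f' f' = f' /\ soc A f' /\ mul x f' = x /\ (forall z, mul z f = z -> mul z f' = z).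
Proof.
  intros Hff Hsf [n [v [Hv ->]]]. revert f Hff Hsf. induction n; intros f Hff Hsf.
  - exists f. repeat split; auto. apply mul_0_l.
  - destruct (IHn (fun i Hi => Hv i (Nat.lt_lt_succ_r _ _ Hi)) f Hff Hsf)
      as [f1 [H1 [S1 [X1 P1]]]].
    destruct (Hv n (Nat.lt_succ_diag_r n)) as [L [HL Ly]].
    destruct (soc_idempotent_extend f1 L (v n) H1 S1 HL Ly) as [f2 [H2 [S2 [X2 P2]]]].
    exists f2. repeat split; auto. simpl. rewrite mul_add_l, P2, X2; auto.
Qed.

Lemma soc_common_right_unit n (w : nat -> A) : (forall i, (i < n)%nat -> soc A (w i)) ->
  exists f, soc A f /\ forall i, (i < n)%nat -> mul (w i) f = w i.
Proof.
  intros Hw.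
  enough (exists f, mul f f = f /\ soc A f /\ forall i, (i < n)%nat -> mul (w i) f = w i)
    as [f [_ Hf]] by (exists f; exact Hf).
  induction n.
  - exists zero. split; [apply mul_0_l|split]; [apply soc_zero | intros; lia].
  - destruct IHn as [f [Hf [Sf Xf]]]; [intros; apply Hw; lia|].
    destruct (soc_idempotent_extend_soc f (w n) Hf Sf (Hw n (Nat.lt_succ_diag_r n)))
      as [f' [H1 [S1 [X1 P1]]]].
    exists f'. repeat split; auto. intros i Hi.
    destruct (Nat.eq_dec i n) as [->|Hne]; auto. apply P1, Xf. lia.
Qed.

End LocalUnits.

Lemma soc_common_left_unit (A : CBanachAlgebra) n (w : nat -> A) : semiprime A ->
  (forall i, (i < n)%nat -> soc A (w i)) ->
  exists g, soc A g /\ forall i, (i < n)%nat -> mul g (w i) = w i.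
Proof.
  intros hSP Hw.
  destruct (soc_common_right_unit (opposite A) (semiprime_opposite A hSP) n w) as [g [Hg Hgw]].
  { intros i Hi. apply soc_opposite; auto. }
  exists g. split; [apply soc_of_opposite; auto | exact Hgw].
Qed.
Lemma le_cv_0 (a C : R) (s : nat -> R) : Un_cv s 0 -> (forall n, a <= C * s n) -> a <= 0.
Proof.
  intros Hs Ha. apply Rnot_lt_le. intro Hpos.
  destruct (Hs (a / (Rabs C + 1))) as [N HN].
  { apply Rdiv_lt_0_compat; auto. pose proof (Rabs_pos C); lra. }
  specialize (HN N (le_n N)). specialize (Ha N). unfold R_dist in HN.
  rewrite Rminus_0_r in HN.
  assert (C * s N <= Rabs C * Rabs (s N)) by (rewrite <- Rabs_mult; apply Rle_abs).
  assert (Rabs C * Rabs (s N) <= Rabs C * (a / (Rabs C + 1)))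
    by (apply Rmult_le_compat_l; [apply Rabs_pos | lra]).
  assert (Rabs C * (a / (Rabs C + 1)) < a).
  { pose proof (Rabs_pos C). apply Rmult_lt_reg_r with (Rabs C + 1); [lra|].
    replace (Rabs C * (a / (Rabs C + 1)) * (Rabs C + 1)) with (Rabs C * a) by (field; lra).
    lra. }
  lra.
Qed.

Section Corner.
Variable A : CBanachAlgebra.
Variable e : A.
Hypothesis He : mul e e = e.
Implicit Types b c : A.

Definition in_corner b : Prop := mul e b = b /\ mul b e = b.

Lemma in_corner_add b c : in_corner b -> in_corner c -> in_corner (add b c).
Proof.
  intros [H1 H2] [H3 H4]. split; [rewrite mul_add_r, H1, H3 | rewrite mul_add_l, H2, H4]; auto.
Qed.
Lemma in_corner_opp b : in_corner b -> in_corner (opp b).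
Proof. intros [H1 H2]. split; [rewrite <- H1 at 2 | rewrite <- H2 at 2]; ncring. Qed.
Lemma in_corner_zero : in_corner zero.
Proof. split; [apply mul_0_r | apply mul_0_l]. Qed.
Lemma in_corner_mul b c : in_corner b -> in_corner c -> in_corner (mul b c).
Proof.
  intros [H1 H2] [H3 H4]. split; [rewrite mul_assoc, H1 | rewrite <- mul_assoc, H4]; auto.
Qed.
Lemma in_corner_unit : in_corner e.
Proof. split; exact He. Qed.
Lemma in_corner_scal a b : in_corner b -> in_corner (scal a b).
Proof.
  intros [H1 H2]. split; [rewrite mul_scal_r, H1 | rewrite mul_scal_l, H2]; auto.
Qed.

Lemma in_corner_closed (u : nat -> A) l : (forall n, in_corner (u n)) ->
  Un_cv (fun n => norm (add (u n) (opp l))) 0 -> in_corner l.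
Proof.
  intros Hu Hl.
  assert (Hbound : forall n, norm (add (mul e l) (opp l)) <= (norm e + 1) * norm (add (u n) (opp l))
                     /\ norm (add (mul l e) (opp l)) <= (norm e + 1) * norm (add (u n) (opp l))).
  { intro n. destruct (Hu n) as [H1 H2]. pose proof (norm_nonneg e).
    pose proof (norm_nonneg (add (u n) (opp l))). split.
    - replace (add (mul e l) (opp l))
        with (add (add (u n) (opp l)) (opp (mul e (add (u n) (opp l))))) by (rewrite <- H1 at 1; ncring).
      eapply Rle_trans; [apply norm_sub_le|]. pose proof (norm_mul e (add (u n) (opp l))). nra.
    - replace (add (mul l e) (opp l))
        with (add (add (u n) (opp l)) (opp (mul (add (u n) (opp l)) e))) by (rewrite <- H2 at 1; ncring).
      eapply Rle_trans; [apply norm_sub_le|]. pose proof (norm_mul (add (u n) (opp l)) e). nra. }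
  split; apply sub_eq_0, norm_eq0, Rle_antisym; try apply norm_nonneg;
    eapply le_cv_0; [exact Hl| |exact Hl|]; intro n; apply Hbound.
Qed.

Definition corner_car : Type := {b : A | in_corner b}.

Lemma corner_eq (u v : corner_car) : proj1_sig u = proj1_sig v -> u = v.
Proof. destruct u, v; simpl; intros ->. f_equal. apply proof_irrelevance. Qed.

Definition corner : CBanachAlgebra.
Proof.
  refine {| car := corner_car;
    add u v := exist _ _ (in_corner_add _ _ (proj2_sig u) (proj2_sig v));
    opp u := exist _ _ (in_corner_opp _ (proj2_sig u));
    zero := exist _ _ in_corner_zero;
    mul u v := exist _ _ (in_corner_mul _ _ (proj2_sig u) (proj2_sig v));
    one := exist _ _ in_corner_unit;
    scal a u := exist _ _ (in_corner_scal a _ (proj2_sig u));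
    norm u := norm (proj1_sig u) |};
  try (intros; apply corner_eq; simpl).
  - apply add_assoc. - apply add_comm. - apply add_zero. - apply add_opp.
  - apply scal_assoc. - apply scal_one. - apply scal_add_vec. - apply scal_add_scal.
  - apply mul_assoc. - apply (proj2_sig x). - apply (proj2_sig x).
  - apply mul_add_l. - apply mul_add_r. - apply mul_scal_l. - apply mul_scal_r.
  - intros u. split; [intro H; apply corner_eq, norm_eq0, H | intros ->; apply norm_zero].
  - intros; apply norm_triangle. - intros; apply norm_scal. - intros; apply norm_mul.
  - intros u Hu. destruct (complete (fun n => proj1_sig (u n)) Hu) as [l Hl].
    exists (exist _ l (in_corner_closed _ l (fun n => proj2_sig (u n)) Hl)). exact Hl.
Defined.

End Corner.

(** * Gelfand-Mazur *)

Definition Csub (a b : Defs.C) : Defs.C := (fst a - fst b, snd a - snd b).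

Lemma Cabs_Cmod (c : Defs.C) : Cabs c = Coquelicot.Complex.Cmod c.
Proof. unfold Cabs, Coquelicot.Complex.Cmod. f_equal. simpl. ring. Qed.

Lemma Cabs_mul a b : Cabs (Cmul a b) = Cabs a * Cabs b.
Proof. rewrite !Cabs_Cmod. apply Coquelicot.Complex.Cmod_mult. Qed.

Lemma Cmul_Cinv_l c : c <> Defs.C0 -> Cmul (Coquelicot.Complex.Cinv c) c = Defs.C1.
Proof. exact (Coquelicot.Complex.Cinv_l c). Qed.

Lemma Cmul_Cinv_cancel a c : c <> Defs.C0 -> Cmul (Cmul a (Coquelicot.Complex.Cinv c)) c = a.
Proof.
  intro Hc.
  change (Coquelicot.Complex.Cmult (Coquelicot.Complex.Cmult a (Coquelicot.Complex.Cinv c)) c = a).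
  rewrite <- Coquelicot.Complex.Cmult_assoc, Coquelicot.Complex.Cinv_l, Coquelicot.Complex.Cmult_1_r;
    auto.
Qed.

Lemma scal_eq_0 (A : CBanachAlgebra) c (y : A) : c <> Defs.C0 -> scal c y = zero -> y = zero.
Proof.
  intros Hc H. rewrite <- (scal_one y), <- (Cmul_Cinv_l c Hc), <- scal_assoc, H. apply scal_0_r.
Qed.

Lemma Cabs_nonneg c : 0 <= Cabs c.
Proof. apply sqrt_pos. Qed.

Lemma Cabs_sq c : Cabs c * Cabs c = fst c * fst c + snd c * snd c.
Proof. apply sqrt_sqrt. nra. Qed.

Lemma Cabs_real r : Cabs (r, 0) = Rabs r.
Proof.
  unfold Cabs; simpl. replace (r * r + 0 * 0) with (Rsqr r) by (unfold Rsqr; ring).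
  apply sqrt_Rsqr_abs.
Qed.

Lemma Cabs_C0 : Cabs Defs.C0 = 0.
Proof. unfold Defs.C0. rewrite Cabs_real, Rabs_R0. reflexivity. Qed.

Lemma Cabs_fst_snd c : Rabs (fst c) <= Cabs c /\ Rabs (snd c) <= Cabs c.
Proof.
  pose proof (Cabs_sq c). pose proof (Cabs_nonneg c).
  split; rewrite <- (Rabs_right (Cabs c)) by lra; apply Rsqr_le_abs_0; unfold Rsqr; nra.
Qed.

Lemma Cabs_le_sum c : Cabs c <= Rabs (fst c) + Rabs (snd c).
Proof.
  pose proof (Cabs_sq c). pose proof (Cabs_nonneg c).
  pose proof (Rabs_pos (fst c)). pose proof (Rabs_pos (snd c)).
  assert (Rabs (fst c) * Rabs (fst c) = fst c * fst c)
    by (rewrite <- Rabs_mult; apply Rabs_right; nra).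
  assert (Rabs (snd c) * Rabs (snd c) = snd c * snd c)
    by (rewrite <- Rabs_mult; apply Rabs_right; nra).
  apply Rsqr_incr_0_var; [unfold Rsqr; nra | lra].
Qed.

Lemma Cabs_Csub_mul r a b : Cabs (Csub (Cmul r a) (Cmul r b)) = Cabs r * Cabs (Csub a b).
Proof. rewrite <- Cabs_mul. unfold Csub, Cmul. f_equal. simpl. f_equal; ring. Qed.

Lemma Cabs_Csub_real a b : Cabs (Csub (a, 0) (b, 0)) = Rabs (a - b).
Proof. unfold Csub; simpl. rewrite <- Cabs_real. do 2 f_equal. ring. Qed.

(* The principal square root, with nonnegative real part. *)
Definition csqrt (z : Defs.C) : Defs.C :=
  (sqrt ((Cabs z + fst z) / 2),
   if Rle_dec 0 (snd z) then sqrt ((Cabs z - fst z) / 2) else - sqrt ((Cabs z - fst z) / 2)).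

Lemma csqrt_radicands z : 0 <= (Cabs z + fst z) / 2 /\ 0 <= (Cabs z - fst z) / 2.
Proof. destruct (Cabs_fst_snd z) as [H _]. unfold Rabs in H. destruct (Rcase_abs (fst z)); split; lra. Qed.

Lemma csqrt_sq z : Cmul (csqrt z) (csqrt z) = z.
Proof.
  destruct (csqrt_radicands z) as [H1 H2]. pose proof (Cabs_sq z) as HC.
  destruct z as [a b]. unfold csqrt, Cmul; simpl in *. set (r := Cabs (a, b)) in *.
  assert (Hb : sqrt ((r + a) / 2) * sqrt ((r - a) / 2) = Rabs (b / 2)).
  { rewrite <- sqrt_mult by auto. rewrite <- sqrt_Rsqr_abs. f_equal. unfold Rsqr.
    field_simplify. nra. }
  destruct (Rle_dec 0 b) as [Hb0|Hb0]; f_equal.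
  - rewrite !sqrt_sqrt by auto. field.
  - transitivity (2 * (sqrt ((r + a) / 2) * sqrt ((r - a) / 2))); [ring|].
    rewrite Hb, Rabs_right by lra. field.
  - transitivity (sqrt ((r + a) / 2) * sqrt ((r + a) / 2) - sqrt ((r - a) / 2) * sqrt ((r - a) / 2));
      [ring|]. rewrite !sqrt_sqrt by auto. field.
  - transitivity (- (2 * (sqrt ((r + a) / 2) * sqrt ((r - a) / 2)))); [ring|].
    rewrite Hb, Rabs_left by lra. field.
Qed.

Lemma Cabs_csqrt_1 z : Cabs z = 1 -> Cabs (csqrt z) = 1.
Proof.
  intro Hz. destruct (csqrt_radicands z) as [H1 H2].
  rewrite <- sqrt_1. unfold Cabs at 1. f_equal. unfold csqrt; simpl.
  transitivity (sqrt ((Cabs z + fst z) / 2) * sqrt ((Cabs z + fst z) / 2)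
              + sqrt ((Cabs z - fst z) / 2) * sqrt ((Cabs z - fst z) / 2)).
  - destruct (Rle_dec 0 (snd z)); ring.
  - rewrite !sqrt_sqrt by auto. rewrite Hz. field.
Qed.

Lemma csqrt_contract z : Cabs z = 1 ->
  Cabs (Csub (csqrt z) Defs.C1) <= 3/4 * Cabs (Csub z Defs.C1).
Proof.
  intro Hz. set (s := csqrt z). pose proof (Cabs_csqrt_1 z Hz) as Hs. fold s in Hs.
  assert (Hre : 0 <= fst s) by apply sqrt_pos.
  assert (E : Csub z Defs.C1 = Cmul (Csub s Defs.C1) (Cadd s Defs.C1)).
  { rewrite <- (csqrt_sq z). fold s. destruct s as [a b].
    unfold Csub, Cmul, Cadd, Defs.C1; simpl. f_equal; ring. }
  rewrite E, Cabs_mul.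
  assert (H2 : 4/3 <= Cabs (Cadd s Defs.C1)).
  { pose proof (Cabs_sq (Cadd s Defs.C1)) as HA. pose proof (Cabs_sq s) as HB.
    rewrite Hs in HB. pose proof (Cabs_nonneg (Cadd s Defs.C1)).
    destruct s as [a b]. unfold Cadd, Defs.C1 in *; simpl in *. nra. }
  pose proof (Cabs_nonneg (Csub s Defs.C1)). nra.
Qed.

(* [unity_root m] lists the [2^m]-th roots of unity so that the indices [2i], [2i+1]
   at level [m+1] hold the two square roots of the root with index [i] at level [m]. *)
Fixpoint unity_root (m i : nat) : Defs.C :=
  match m with
  | O => Defs.C1
  | S m' => if Nat.even i then csqrt (unity_root m' (Nat.div2 i))
            else Cmul (-1, 0) (csqrt (unity_root m' (Nat.div2 i)))
  end.

Lemma Cabs_unity_root m i : Cabs (unity_root m i) = 1.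
Proof.
  revert i; induction m; intro i; simpl.
  - unfold Defs.C1. rewrite Cabs_real, Rabs_R1. reflexivity.
  - destruct (Nat.even i); [|rewrite Cabs_mul, Cabs_m1, Rmult_1_l]; apply Cabs_csqrt_1; auto.
Qed.

Lemma unity_root_even m i : unity_root (S m) (2 * i) = csqrt (unity_root m i).
Proof. cbn [unity_root]. rewrite Nat.even_even, Nat.div2_double. reflexivity. Qed.

Lemma unity_root_odd m i : unity_root (S m) (S (2 * i)) = Cmul (-1, 0) (csqrt (unity_root m i)).
Proof.
  cbn [unity_root]. rewrite Nat.div2_succ_double.
  replace (Nat.even (S (2 * i))) with false; [reflexivity|].
  rewrite <- Nat.add_1_r, Nat.even_odd. reflexivity.
Qed.

Fixpoint root_minus_one (m : nat) : Defs.C :=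
  match m with O => (-1, 0) | S m' => csqrt (root_minus_one m') end.

Lemma root_minus_one_pow m : Coquelicot.Complex.Cpow (root_minus_one m) (2 ^ m) = (-1, 0).
Proof.
  induction m.
  - simpl. unfold Coquelicot.Complex.Cmult, Coquelicot.Complex.RtoC; simpl. f_equal; ring.
  - rewrite Nat.pow_succ_r', Coquelicot.Complex.Cpow_mult_r. simpl root_minus_one.
    replace (Coquelicot.Complex.Cpow (csqrt (root_minus_one m)) 2) with (root_minus_one m); auto.
    simpl. rewrite Coquelicot.Complex.Cmult_1_r. symmetry. apply csqrt_sq.
Qed.

Lemma Cabs_root_minus_one m : Cabs (root_minus_one m) = 1.
Proof. induction m; [apply Cabs_m1 | apply Cabs_csqrt_1; auto]. Qed.

Lemma root_minus_one_close m : Cabs (Csub (root_minus_one m) Defs.C1) <= 2 * (3/4) ^ m.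
Proof.
  induction m.
  - unfold Csub, Defs.C1; simpl. replace (-1 - 1, 0 - 0) with (-2, 0) by (f_equal; ring).
    rewrite Cabs_real, Rabs_left by lra. lra.
  - simpl root_minus_one. eapply Rle_trans; [apply csqrt_contract, Cabs_root_minus_one|].
    simpl. lra.
Qed.

Lemma cv_pow_3_4 : Un_cv (fun m => (3/4) ^ m) 0.
Proof.
  intros eps Heps. destruct (pow_lt_1_zero (3/4)) with eps as [N HN]; auto.
  { rewrite Rabs_right; lra. }
  exists N. intros n Hn. unfold R_dist. rewrite Rminus_0_r. auto.
Qed.

Lemma Rmin_step a d T : 0 <= a -> 0 <= d -> Rabs (Rmin (a + d) T - Rmin a T) <= d.
Proof.
  intros. unfold Rmin. destruct (Rle_dec (a + d) T), (Rle_dec a T);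
    unfold Rabs; destruct Rcase_abs; lra.
Qed.

Section NormedFacts.
Variable A : CBanachAlgebra.

Lemma geometric_zero (z : A) C : (forall m, norm z <= C * (3/4) ^ m) -> z = zero.
Proof.
  intro H. apply norm_eq0, Rle_antisym; [exact (le_cv_0 _ C _ cv_pow_3_4 H) | apply norm_nonneg].
Qed.

Lemma geometric_telescope (u : nat -> A) C m k :
  (forall m, norm (add (u (S m)) (opp (u m))) <= C * (3/4) ^ m) ->
  norm (add (u (m + k)%nat) (opp (u m))) <= 4 * C * (3/4) ^ m * (1 - (3/4) ^ k).
Proof.
  intro Hu. induction k.
  - rewrite Nat.add_0_r, add_opp, norm_zero. simpl. lra.
  - rewrite Nat.add_succ_r.
    replace (add (u (S (m + k))) (opp (u m)))
      with (add (add (u (S (m + k))) (opp (u (m + k)%nat))) (add (u (m + k)%nat) (opp (u m))))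
      by ncring.
    eapply Rle_trans; [apply norm_triangle|].
    pose proof (Hu (m + k)%nat) as H. rewrite pow_add in H. simpl pow. nra.
Qed.

Lemma geometric_limit (u : nat -> A) C : 0 <= C ->
  (forall m, norm (add (u (S m)) (opp (u m))) <= C * (3/4) ^ m) ->
  exists l, forall m, norm (add (u m) (opp l)) <= 4 * C * (3/4) ^ m.
Proof.
  intros HC Hu.
  assert (Htel : forall m k, norm (add (u (m + k)%nat) (opp (u m))) <= 4 * C * (3/4) ^ m).
  { intros m k. eapply Rle_trans; [apply geometric_telescope, Hu|].
    assert (0 <= C * (3/4) ^ m) by (apply Rmult_le_pos; [|apply pow_le]; lra).
    assert (0 <= (3/4) ^ k) by (apply pow_le; lra). nra. }
  destruct (complete u) as [l Hl].
  - intros eps Heps. destruct (cv_pow_3_4 (eps / (8 * C + 1))) as [N HN].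
    { apply Rdiv_lt_0_compat; lra. }
    exists N. intros p q Hp Hq. specialize (HN N (le_n N)). unfold R_dist in HN.
    rewrite Rminus_0_r, Rabs_right in HN by (apply Rle_ge, pow_le; lra).
    assert (H8 : (8 * C + 1) * (3/4) ^ N < eps).
    { apply Rmult_lt_compat_l with (r := 8 * C + 1) in HN; [|lra].
      replace ((8 * C + 1) * (eps / (8 * C + 1))) with eps in HN by (field; lra). exact HN. }
    replace p with (N + (p - N))%nat by lia. replace q with (N + (q - N))%nat by lia.
    replace (add (u (N + (p - N))%nat) (opp (u (N + (q - N))%nat)))
      with (add (add (u (N + (p - N))%nat) (opp (u N))) (opp (add (u (N + (q - N))%nat) (opp (u N)))))
      by ncring.
    eapply Rle_lt_trans; [apply norm_sub_le|].
    pose proof (Htel N (p - N)%nat). pose proof (Htel N (q - N)%nat).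
    assert (0 <= (3/4) ^ N) by (apply pow_le; lra). nra.
  - exists l. intro m. apply le_epsilon. intros eps Heps.
    destruct (Hl eps Heps) as [N HN]. specialize (HN (m + N)%nat ltac:(lia)).
    unfold R_dist in HN. rewrite Rminus_0_r, Rabs_right in HN by (apply Rle_ge, norm_nonneg).
    replace (add (u m) (opp l))
      with (add (opp (add (u (m + N)%nat) (opp (u m)))) (add (u (m + N)%nat) (opp l))) by ncring.
    eapply Rle_trans; [apply norm_triangle|]. rewrite norm_opp. pose proof (Htel m N). lra.
Qed.

Lemma two_valued_lipschitz (f : R -> A) (a b : A) T D : 0 <= T -> 0 <= D ->
  (forall t, 0 <= t <= T -> f t = a \/ f t = b) ->
  (forall t t', 0 <= t <= T -> 0 <= t' <= T -> norm (add (f t) (opp (f t'))) <= D * Rabs (t - t')) ->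
  f 0 = a -> a <> b -> f T = a.
Proof.
  intros HT HD Hab Hlip Ha Hne.
  assert (Hn : 0 < norm (add a (opp b))) by (apply norm_pos; intro E; apply Hne, sub_eq_0, E).
  set (d := norm (add a (opp b)) / (D + 1)).
  assert (Hd : 0 < d) by (apply Rdiv_lt_0_compat; lra).
  assert (HDd : D * d < norm (add a (opp b))).
  { unfold d. apply Rmult_lt_reg_r with (D + 1); [lra|].
    replace (D * (norm (add a (opp b)) / (D + 1)) * (D + 1)) with (D * norm (add a (opp b)))
      by (field; lra). nra. }
  assert (Hrange : forall r, 0 <= r -> 0 <= Rmin r T <= T).
  { intros r Hr. unfold Rmin. destruct (Rle_dec r T); lra. }
  assert (Hk : forall k, f (Rmin (INR k * d) T) = a).
  { induction k.
    - simpl. rewrite Rmult_0_l, Rmin_left by lra. exact Ha.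
    - pose proof (pos_INR k). assert (0 <= INR k * d) by nra.
      destruct (Hab (Rmin (INR (S k) * d) T)) as [Hb|Hb]; auto.
      { apply Hrange. rewrite S_INR. nra. }
      exfalso. pose proof (Hlip (Rmin (INR k * d) T) (Rmin (INR (S k) * d) T)) as Hl.
      rewrite IHk, Hb, S_INR, Rmult_plus_distr_r, Rmult_1_l in Hl.
      pose proof (Rmin_step (INR k * d) d T ltac:(lra) ltac:(lra)).
      rewrite Rabs_minus_sym in Hl.
      assert (norm (add a (opp b)) <= D * d).
      { eapply Rle_trans; [apply Hl; apply Hrange; nra|]. apply Rmult_le_compat_l; auto. }
      lra. }
  destruct (archimed (T / d)) as [Hup _].
  assert (Hz : (0 < up (T / d))%Z).
  { apply lt_0_IZR. assert (0 <= T / d) by (unfold Rdiv; apply Rmult_le_pos; [|left; apply Rinv_0_lt_compat]; lra). lra. }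
  specialize (Hk (Z.to_nat (up (T / d)))).
  rewrite INR_IZR_INZ, Znat.Z2Nat.id in Hk by lia.
  rewrite Rmin_right in Hk; auto.
  apply Rmult_gt_compat_r with (r := d) in Hup; auto. unfold Rdiv in Hup.
  rewrite Rmult_assoc, Rinv_l, Rmult_1_r in Hup by lra. lra.
Qed.

Lemma norm_vsum_le (g : nat -> A) n K : (forall i, (i < n)%nat -> norm (g i) <= K) ->
  norm (vsum A g n) <= INR n * K.
Proof.
  induction n; intro H.
  - simpl. rewrite norm_zero. lra.
  - simpl vsum. eapply Rle_trans; [apply norm_triangle|]. rewrite S_INR.
    pose proof (IHn (fun i Hi => H i (Nat.lt_lt_succ_r _ _ Hi))).
    pose proof (H n (Nat.lt_succ_diag_r n)). lra.
Qed.

(* From [W (1 - a X) = 1] and [X Xi = 1] one gets [a W = (W - 1) Xi]. *)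
Lemma norm_inv_one_sub_scal_le (W X Xi : A) a :
  mul W (add one (opp (scal a X))) = one -> mul X Xi = one ->
  Cabs a * norm W <= (norm W + norm (one : A)) * norm Xi.
Proof.
  intros HW HX. rewrite <- norm_scal.
  replace (scal a W) with (mul (add W (opp one)) Xi).
  - eapply Rle_trans; [apply norm_mul|].
    apply Rmult_le_compat_r; [apply norm_nonneg | apply norm_sub_le].
  - replace (add W (opp one)) with (mul W (scal a X)) by (rewrite <- HW; ncring).
    rewrite mul_scal_r, mul_scal_l, <- mul_assoc, HX, mul_one_r. reflexivity.
Qed.

End NormedFacts.

Lemma scal_two (A : CBanachAlgebra) (y : A) : scal (2, 0) y = add y y.
Proof.
  replace (2, 0) with (Cadd Defs.C1 Defs.C1) by (unfold Cadd, Defs.C1; simpl; f_equal; ring).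
  rewrite scal_add_scal, scal_one. reflexivity.
Qed.

Lemma scal_half_two (A : CBanachAlgebra) (y : A) : scal (/ 2, 0) (scal (2, 0) y) = y.
Proof.
  rewrite scal_assoc. replace (Cmul (/ 2, 0) (2, 0)) with Defs.C1; [apply scal_one|].
  unfold Cmul, Defs.C1; simpl. f_equal; field.
Qed.

Lemma scal_sub (A : CBanachAlgebra) a b (y : A) :
  add (scal a y) (opp (scal b y)) = scal (Csub a b) y.
Proof.
  rewrite opp_scal, <- scal_add_scal. f_equal. unfold Cadd, Cmul, Csub; simpl. f_equal; ring.
Qed.

(* If [b = 2ab - a^2] then [l^2 - l] is small whenever [l] is close to both [a] and [b]. *)
Lemma mul_self_sub_decomp (A : CBanachAlgebra) (l a b : A) :
  b = add (add (mul a b) (mul a b)) (opp (mul a a)) ->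
  add (mul l l) (opp l) =
  add (add (add (add (mul (add l (opp a)) l) (mul a (add l (opp b)))) (mul a (add l (opp b))))
           (mul a (add a (opp l)))) (add b (opp l)).
Proof.
  intro Hb. transitivity (add (add (add (add (add (mul (add l (opp a)) l) (mul a (add l (opp b))))
    (mul a (add l (opp b)))) (mul a (add a (opp l)))) (add b (opp l)))
    (add (add (add (mul a b) (mul a b)) (opp (mul a a))) (opp b))); [ncring|].
  rewrite <- Hb, add_opp, add_zero. reflexivity.
Qed.

Section DivisionAlgebra.
Variable B : CBanachAlgebra.
Hypothesis one_neq_0 : (one : B) <> zero.
Hypothesis division : forall b : B, b <> zero -> exists c, mul c b = one /\ mul b c = one.
Implicit Types (b c y z : B).

Definition inv b : B := epsilon (inhabits zero) (fun c => mul c b = one /\ mul b c = one).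

Lemma inv_spec b : b <> zero -> mul (inv b) b = one /\ mul b (inv b) = one.
Proof. intro Hb. exact (epsilon_spec (inhabits zero) (fun c => mul c b = one /\ mul b c = one) (division b Hb)). Qed.

Lemma inv_unique b c : mul b c = one -> inv b = c.
Proof.
  intro H. assert (Hb : b <> zero) by (intro E; rewrite E, mul_0_l in H; auto).
  destruct (inv_spec b Hb) as [H1 _].
  transitivity (mul (inv b) (mul b c)); [rewrite H; symmetry; apply mul_one_r|].
  rewrite mul_assoc, H1. apply mul_one_l.
Qed.

Lemma mul_neq_0 b c : b <> zero -> c <> zero -> mul b c <> zero.
Proof.
  intros Hb Hc E. apply Hc. destruct (inv_spec b Hb) as [H1 _].
  transitivity (mul (mul (inv b) b) c); [rewrite H1; symmetry; apply mul_one_l|].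
  rewrite <- mul_assoc, E. apply mul_0_r.
Qed.

Lemma inv_one_sub_sq y : add one (opp y) <> zero -> add one y <> zero ->
  inv (add one (opp (mul y y))) = mul (inv (add one (opp y))) (inv (add one y)).
Proof.
  intros H1 H2. destruct (inv_spec _ H1) as [_ P]. destruct (inv_spec _ H2) as [_ Q].
  apply inv_unique.
  transitivity (mul (mul (add one y) (mul (add one (opp y)) (inv (add one (opp y)))))
                    (inv (add one y))); [ncring|].
  rewrite P, mul_one_r. exact Q.
Qed.

Lemma inv_one_sub_add y : add one (opp y) <> zero -> add one y <> zero ->
  add (inv (add one (opp y))) (inv (add one y)) = scal (2, 0) (inv (add one (opp (mul y y)))).
Proof.
  intros H1 H2. rewrite inv_one_sub_sq, scal_two by auto.
  destruct (inv_spec _ H1) as [P _]. destruct (inv_spec _ H2) as [_ Q].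
  set (p := inv (add one (opp y))) in *. set (q := inv (add one y)) in *.
  transitivity (add (mul (mul p (add one y)) q) (mul (mul p (add one (opp y))) q)); [|ncring].
  rewrite P, <- mul_assoc, Q. f_equal; [symmetry; apply mul_one_r | symmetry; apply mul_one_l].
Qed.

Fixpoint power y n : B := match n with O => one | S k => mul y (power y k) end.

Lemma power_add y n m : power y (n + m) = mul (power y n) (power y m).
Proof. induction n; simpl; [symmetry; apply mul_one_l | rewrite IHn, mul_assoc; auto]. Qed.

Lemma power_succ_r y n : power y (S n) = mul (power y n) y.
Proof.
  replace (S n) with (n + 1)%nat by lia. rewrite power_add. simpl. rewrite mul_one_r. reflexivity.
Qed.

Lemma power_double y n : power (mul y y) n = power y (2 * n).
Proof.
  induction n; auto. replace (2 * S n)%nat with (S (S (2 * n))) by lia.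
  simpl. rewrite IHn, mul_assoc. replace (n + (n + 0))%nat with (2 * n)%nat by lia. reflexivity.
Qed.

Lemma power_scal a y n : power (scal a y) n = scal (Coquelicot.Complex.Cpow a n) (power y n).
Proof.
  induction n; simpl; [symmetry; apply scal_one|].
  rewrite IHn, mul_scal_l, mul_scal_r, scal_assoc. reflexivity.
Qed.

Lemma power_inv y z n : mul y z = one -> mul z y = one -> mul (power y n) (power z n) = one.
Proof.
  intros Hyz Hzy. induction n; [apply mul_one_l|].
  rewrite (power_succ_r z). simpl power.
  transitivity (mul (mul y (mul (power y n) (power z n))) z); [ncring|].
  rewrite IHn, mul_one_r. exact Hyz.
Qed.

Lemma norm_power y n : norm (power y (S n)) <= norm y ^ S n.
Proof.
  induction n.
  - simpl. rewrite mul_one_r, Rmult_1_r. apply Rle_refl.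
  - change (power y (S (S n))) with (mul y (power y (S n))).
    eapply Rle_trans; [apply norm_mul|]. simpl pow.
    apply Rmult_le_compat_l; [apply norm_nonneg | exact IHn].
Qed.

Definition avoids_one y : Prop := forall a, add one (opp (scal a y)) <> zero.

Lemma scal_csqrt_mul a y : scal a (mul y y) = mul (scal (csqrt a) y) (scal (csqrt a) y).
Proof. rewrite mul_scal_l, mul_scal_r, scal_assoc, csqrt_sq. reflexivity. Qed.

Lemma one_add_scal a y : add one (scal a y) = add one (opp (scal (Cmul (-1, 0) a) y)).
Proof. rewrite <- opp_scal, opp_involutive. reflexivity. Qed.

Lemma avoids_one_mul_self y : avoids_one y -> avoids_one (mul y y).
Proof.
  intros Hy a. rewrite scal_csqrt_mul.
  replace (add one (opp (mul (scal (csqrt a) y) (scal (csqrt a) y))))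
    with (mul (add one (opp (scal (csqrt a) y))) (add one (scal (csqrt a) y))) by ncring.
  apply mul_neq_0; [|rewrite one_add_scal]; apply Hy.
Qed.

Lemma avoids_one_power m y : avoids_one y -> add one (opp (power y (2 ^ m))) <> zero.
Proof.
  revert y; induction m; intros y Hy.
  - simpl. rewrite mul_one_r, <- (scal_one y). apply Hy.
  - rewrite Nat.pow_succ_r', <- power_double. apply IHm, avoids_one_mul_self, Hy.
Qed.

Definition avg (m : nat) (g : nat -> B) : B := scal (/ 2 ^ m, 0) (vsum B g (2 ^ m)).

Lemma vsum_pairs (g : nat -> B) n :
  vsum B g (2 * n) = vsum B (fun i => add (g (2 * i)%nat) (g (S (2 * i)))) n.
Proof.
  induction n; auto. replace (2 * S n)%nat with (S (S (2 * n))) by lia.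
  cbn [vsum]. rewrite IHn. ncring.
Qed.

Lemma avg_inv_unity_roots m y : avoids_one y ->
  avg m (fun i => inv (add one (opp (scal (unity_root m i) y)))) = inv (add one (opp (power y (2 ^ m)))).
Proof.
  revert y; induction m; intros y Hy.
  - unfold avg. simpl. rewrite Rinv_1, add_0_l, mul_one_r, !scal_one. reflexivity.
  - rewrite Nat.pow_succ_r', <- power_double, <- (IHm (mul y y)) by (apply avoids_one_mul_self; auto).
    unfold avg. rewrite Nat.pow_succ_r', vsum_pairs.
    rewrite (vsum_ext B _ (fun i => scal (2, 0) (inv (add one (opp (scal (unity_root m i) (mul y y))))))).
    + rewrite <- scal_vsum, scal_assoc. f_equal. unfold Cmul; simpl.
      f_equal; field; apply pow_nonzero; lra.
    + intros i _. rewrite unity_root_even, unity_root_odd, <- one_add_scal, scal_csqrt_mul.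
      apply inv_one_sub_add; [|rewrite one_add_scal]; apply Hy.
Qed.

Lemma norm_avg_le m g K : (forall i, (i < 2 ^ m)%nat -> norm (g i) <= K) -> norm (avg m g) <= K.
Proof.
  intro H. unfold avg. rewrite norm_scal, Cabs_real.
  pose proof (norm_vsum_le B g (2 ^ m) K H) as V. rewrite pow_INR in V.
  replace (INR 2) with 2 in V by (simpl; ring).
  assert (Hp : 0 < 2 ^ m) by (apply pow_lt; lra).
  rewrite Rabs_right by (left; apply Rinv_0_lt_compat; auto).
  apply Rmult_le_reg_l with (2 ^ m); auto. rewrite <- Rmult_assoc, Rinv_r by lra. lra.
Qed.

Lemma avg_sub m g g' : add (avg m g) (opp (avg m g')) = avg m (fun i => add (g i) (opp (g' i))).
Proof.
  unfold avg. rewrite <- scal_opp, <- scal_add_vec, vsum_add. f_equal. f_equal.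
  induction (2 ^ m)%nat as [|n IH]; simpl; [ncring|].
  rewrite <- IH. ncring.
Qed.

Section NonScalar.
Variable x : B.
Hypothesis not_scalar : forall a, x <> scal a one.

Lemma avoids_one_scal s : avoids_one (scal s x).
Proof.
  intros a E. apply sub_eq_0 in E. rewrite scal_assoc in E.
  destruct (classic (Cmul a s = Defs.C0)) as [Hk|Hk].
  - apply one_neq_0. rewrite E, Hk. apply scal_0_l.
  - apply (not_scalar (Coquelicot.Complex.Cinv (Cmul a s))).
    rewrite E, scal_assoc, Cmul_Cinv_l by exact Hk. symmetry; apply scal_one.
Qed.

Definition resolvent s : B := inv (add one (opp (scal s x))).

Lemma resolvent_spec s : mul (resolvent s) (add one (opp (scal s x))) = one /\
                         mul (add one (opp (scal s x))) (resolvent s) = one.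
Proof. apply inv_spec. rewrite <- (scal_one (scal s x)). apply avoids_one_scal. Qed.

Lemma resolvent_sub s s' :
  add (resolvent s) (opp (resolvent s')) = scal (Csub s s') (mul (resolvent s) (mul x (resolvent s'))).
Proof.
  destruct (resolvent_spec s) as [P _]. destruct (resolvent_spec s') as [_ Q].
  transitivity (add (mul (resolvent s) (mul (add one (opp (scal s' x))) (resolvent s')))
                    (opp (mul (mul (resolvent s) (add one (opp (scal s x)))) (resolvent s')))).
  { rewrite P, Q, mul_one_r, mul_one_l. reflexivity. }
  rewrite <- mul_scal_r, <- mul_scal_l, <- scal_sub. ncring.
Qed.

Lemma norm_resolvent_sub s s' : norm (add (resolvent s) (opp (resolvent s')))
  <= Cabs (Csub s s') * (norm (resolvent s) * (norm x * norm (resolvent s'))).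
Proof.
  rewrite resolvent_sub, norm_scal. apply Rmult_le_compat_l; [apply Cabs_nonneg|].
  eapply Rle_trans; [apply norm_mul|].
  apply Rmult_le_compat_l; [apply norm_nonneg | apply norm_mul].
Qed.

Lemma resolvent_local_bound s s' : Cabs (Csub s s') * norm x * norm (resolvent s) <= 1/2 ->
  norm (resolvent s') <= 2 * norm (resolvent s).
Proof.
  intro H. pose proof (norm_resolvent_sub s s') as R.
  pose proof (norm_sub_le (resolvent s) (add (resolvent s) (opp (resolvent s')))) as T.
  replace (add (resolvent s) (opp (add (resolvent s) (opp (resolvent s'))))) with (resolvent s') in T
    by ncring.
  pose proof (norm_nonneg (resolvent s')). pose proof (norm_nonneg (resolvent s)).
  pose proof (Cabs_nonneg (Csub s s')). pose proof (norm_nonneg x). nra.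
Qed.

(* Local boundedness on the compact square [[-T, T]^2] gives a uniform bound. *)
Lemma resolvent_bounded T : 0 < T ->
  exists K, 0 < K /\ forall s, Cabs s <= T -> norm (resolvent s) <= K.
Proof.
  intro HT. set (X := norm x). assert (HX : 0 <= X) by apply norm_nonneg.
  assert (Hdp : forall u v, 0 < / (4 * (X + 1) * (norm (resolvent (u, v)) + 1))).
  { intros. apply Rinv_0_lt_compat. pose proof (norm_nonneg (resolvent (u, v))). nra. }
  destruct (Coquelicot.Compactness.compactness_value_2d (-T) T (-T) T
              (fun u v => mkposreal _ (Hdp u v))) as [d Hd].
  pose proof (cond_pos d) as Hd0.
  exists (/ (2 * d * (X + 1))). split; [apply Rinv_0_lt_compat; nra|].
  intros [a b] Hab. destruct (Cabs_fst_snd (a, b)) as [Ha Hb]. simpl in Ha, Hb.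
  apply NNPP. intro Hneg. apply (Hd a b).
  { unfold Rabs in Ha; destruct Rcase_abs in Ha; split; lra. }
  { unfold Rabs in Hb; destruct Rcase_abs in Hb; split; lra. }
  intros [u [v [_ [_ [Hu [Hv Hdl]]]]]]. simpl in Hu, Hv, Hdl. apply Hneg.
  set (N := norm (resolvent (u, v))) in *. assert (HN : 0 <= N) by apply norm_nonneg.
  set (dl := / (4 * (X + 1) * (N + 1))) in *.
  assert (Hdl_pos : 0 < dl) by apply Hdp.
  assert (Hc : Cabs (Csub (u, v) (a, b)) <= 2 * dl).
  { eapply Rle_trans; [apply Cabs_le_sum|]. simpl.
    rewrite <- (Rabs_Ropp (u - a)), <- (Rabs_Ropp (v - b)).
    replace (- (u - a)) with (a - u) by ring. replace (- (v - b)) with (b - v) by ring. lra. }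
  assert (Hloc : Cabs (Csub (u, v) (a, b)) * X * N <= 1/2).
  { assert (2 * dl * X * N <= 1/2).
    { assert (0 < 4 * (X + 1) * (N + 1)) by nra.
      apply Rmult_le_reg_r with (4 * (X + 1) * (N + 1)); auto.
      replace (2 * dl * X * N * (4 * (X + 1) * (N + 1))) with (2 * X * N) by (unfold dl; field; nra).
      nra. }
    pose proof (Cabs_nonneg (Csub (u, v) (a, b))).
    apply Rle_trans with (2 * dl * X * N); auto.
    apply Rmult_le_compat_r; auto. apply Rmult_le_compat_r; auto. }
  pose proof (resolvent_local_bound (u, v) (a, b) Hloc) as Hl. fold N in Hl.
  apply Rle_trans with (2 * N); auto.
  assert (N + 1 <= / (4 * d * (X + 1))).
  { assert (d * (4 * (X + 1) * (N + 1)) <= 1).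
    { apply Rle_trans with (dl * (4 * (X + 1) * (N + 1))); [apply Rmult_le_compat_r; nra|].
      unfold dl. rewrite Rinv_l; [lra | nra]. }
    apply Rmult_le_reg_l with (4 * d * (X + 1)); [nra|]. rewrite Rinv_r by nra. nra. }
  replace (/ (2 * d * (X + 1))) with (2 * / (4 * d * (X + 1))) by (field; nra). lra.
Qed.

(* By [avg_inv_unity_roots], the mean of [resolvent] over [2^m] points of the circle of radius [|s|]. *)
Definition averaged_resolvent m s : B := inv (add one (opp (power (scal s x) (2 ^ m)))).

Lemma averaged_resolvent_avg m s :
  averaged_resolvent m s = avg m (fun i => resolvent (Cmul (unity_root m i) s)).
Proof.
  unfold averaged_resolvent. rewrite <- avg_inv_unity_roots by apply avoids_one_scal.
  unfold avg. f_equal. apply vsum_ext. intros i _. unfold resolvent. rewrite scal_assoc. reflexivity.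
Qed.

Lemma averaged_resolvent_succ m s :
  scal (2, 0) (averaged_resolvent (S m) s)
    = add (averaged_resolvent m s) (averaged_resolvent m (Cmul (root_minus_one m) s)) /\
  averaged_resolvent (S m) s
    = mul (averaged_resolvent m s) (averaged_resolvent m (Cmul (root_minus_one m) s)).
Proof.
  unfold averaged_resolvent. set (Y := power (scal s x) (2 ^ m)).
  assert (E1 : power (scal s x) (2 ^ S m) = mul Y Y).
  { rewrite Nat.pow_succ_r'. replace (2 * 2 ^ m)%nat with (2 ^ m + 2 ^ m)%nat by lia.
    apply power_add. }
  assert (E2 : power (scal (Cmul (root_minus_one m) s) x) (2 ^ m) = opp Y).
  { rewrite <- scal_assoc, power_scal, root_minus_one_pow, scal_m1. reflexivity. }
  assert (N1 : add one (opp Y) <> zero) by apply avoids_one_power, avoids_one_scal.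
  assert (N2 : add one Y <> zero).
  { rewrite <- (opp_involutive B Y), <- E2. apply avoids_one_power, avoids_one_scal. }
  rewrite E1, E2, opp_involutive.
  split; [symmetry; apply inv_one_sub_add | apply inv_one_sub_sq]; auto.
Qed.

Section Bounds.
Variables T K : R.
Hypothesis HT : 0 < T.
Hypothesis resolvent_le : forall s, Cabs s <= T -> norm (resolvent s) <= K.

Definition lip : R := K * (norm x * K).

Lemma lip_nonneg : 0 <= lip.
Proof.
  assert (0 <= K).
  { eapply Rle_trans; [apply (norm_nonneg (resolvent Defs.C0)) | apply resolvent_le].
    rewrite Cabs_C0. lra. }
  pose proof (norm_nonneg x). unfold lip. apply Rmult_le_pos; [|apply Rmult_le_pos]; lra.
Qed.

Lemma resolvent_lipschitz s s' : Cabs s <= T -> Cabs s' <= T ->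
  norm (add (resolvent s) (opp (resolvent s'))) <= lip * Cabs (Csub s s').
Proof.
  intros H1 H2. eapply Rle_trans; [apply norm_resolvent_sub|]. rewrite Rmult_comm.
  apply Rmult_le_compat_r; [apply Cabs_nonneg|]. unfold lip.
  pose proof (resolvent_le s H1). pose proof (resolvent_le s' H2).
  pose proof (norm_nonneg (resolvent s)). pose proof (norm_nonneg (resolvent s')).
  pose proof (norm_nonneg x).
  apply Rmult_le_compat; try lra; [apply Rmult_le_pos; auto|]. apply Rmult_le_compat_l; auto.
Qed.

Lemma averaged_resolvent_le m s : Cabs s <= T -> norm (averaged_resolvent m s) <= K.
Proof.
  intro H. rewrite averaged_resolvent_avg. apply norm_avg_le. intros i _.
  apply resolvent_le. rewrite Cabs_mul, Cabs_unity_root, Rmult_1_l. exact H.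
Qed.

Lemma averaged_resolvent_lipschitz m s s' : Cabs s <= T -> Cabs s' <= T ->
  norm (add (averaged_resolvent m s) (opp (averaged_resolvent m s'))) <= lip * Cabs (Csub s s').
Proof.
  intros H1 H2. rewrite !averaged_resolvent_avg, avg_sub. apply norm_avg_le. intros i _.
  eapply Rle_trans; [apply resolvent_lipschitz; rewrite Cabs_mul, Cabs_unity_root, Rmult_1_l; auto|].
  rewrite Cabs_Csub_mul, Cabs_unity_root, Rmult_1_l. apply Rle_refl.
Qed.

Lemma averaged_resolvent_step m s : Cabs s <= T ->
  norm (add (averaged_resolvent (S m) s) (opp (averaged_resolvent m s))) <= lip * T * (3/4) ^ m.
Proof.
  intro Hs. destruct (averaged_resolvent_succ m s) as [R1 _].
  set (w := Cmul (root_minus_one m) s).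
  assert (E : add (averaged_resolvent (S m) s) (opp (averaged_resolvent m s))
            = scal (/ 2, 0) (add (averaged_resolvent m w) (opp (averaged_resolvent m s)))).
  { rewrite <- (scal_half_two B (add (averaged_resolvent (S m) s) (opp (averaged_resolvent m s)))).
    f_equal. rewrite scal_add_vec, R1, scal_opp, scal_two. ncring. }
  rewrite E, norm_scal, Cabs_real, Rabs_right by lra.
  assert (Hw : Cabs w <= T) by (unfold w; rewrite Cabs_mul, Cabs_root_minus_one, Rmult_1_l; auto).
  pose proof (averaged_resolvent_lipschitz m w s Hw Hs) as Hl.
  replace (Cabs (Csub w s)) with (Cabs s * Cabs (Csub (root_minus_one m) Defs.C1)) in Hl.
  - pose proof (root_minus_one_close m). pose proof (Cabs_nonneg s).
    pose proof (Cabs_nonneg (Csub (root_minus_one m) Defs.C1)). pose proof lip_nonneg.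
    assert (0 <= (3/4) ^ m) by (apply pow_le; lra).
    assert (Cabs s * Cabs (Csub (root_minus_one m) Defs.C1) <= T * (2 * (3/4) ^ m))
      by (apply Rmult_le_compat; auto).
    assert (lip * (Cabs s * Cabs (Csub (root_minus_one m) Defs.C1)) <= lip * (T * (2 * (3/4) ^ m)))
      by (apply Rmult_le_compat_l; auto).
    lra.
  - rewrite <- Cabs_mul. f_equal. unfold w. destruct s as [a b], (root_minus_one m) as [c d].
    unfold Csub, Cmul, Defs.C1; simpl. f_equal; ring.
Qed.

Definition projection s : B := epsilon (inhabits zero)
  (fun l => forall m, norm (add (averaged_resolvent m s) (opp l)) <= 4 * (lip * T) * (3/4) ^ m).

Lemma projection_close s m : Cabs s <= T ->
  norm (add (averaged_resolvent m s) (opp (projection s))) <= 4 * (lip * T) * (3/4) ^ m.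
Proof.
  intro Hs. revert m.
  apply (epsilon_spec (inhabits zero)
    (fun l => forall m, norm (add (averaged_resolvent m s) (opp l)) <= 4 * (lip * T) * (3/4) ^ m)).
  apply geometric_limit; [pose proof lip_nonneg; nra|]. intro m. apply averaged_resolvent_step, Hs.
Qed.

Lemma norm_projection_le s : Cabs s <= T -> norm (projection s) <= K + 4 * (lip * T).
Proof.
  intro Hs. pose proof (projection_close s 0 Hs) as H0. pose proof (averaged_resolvent_le 0 s Hs).
  simpl in H0. rewrite Rmult_1_r in H0.
  replace (projection s) with (add (averaged_resolvent 0 s)
                                 (opp (add (averaged_resolvent 0 s) (opp (projection s))))) by ncring.
  eapply Rle_trans; [apply norm_sub_le|]. lra.
Qed.

Lemma projection_idempotent s : Cabs s <= T -> mul (projection s) (projection s) = projection s.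
Proof.
  intro Hs. apply sub_eq_0.
  apply (geometric_zero B _ (4 * (lip * T) * (K + 4 * (lip * T) + 3 * K + 1))). intro m.
  set (a := averaged_resolvent m s). set (b := averaged_resolvent (S m) s). set (l := projection s).
  destruct (averaged_resolvent_succ m s) as [R1 R2]. fold a b in R1, R2.
  set (q := averaged_resolvent m (Cmul (root_minus_one m) s)) in *.
  assert (Hq : q = add (add b b) (opp a)) by (rewrite <- scal_two, R1; ncring).
  rewrite (mul_self_sub_decomp B l a b).
  2:{ rewrite R2 at 1. rewrite Hq. ncring. }
  pose proof (projection_close s m Hs) as Ca. pose proof (projection_close s (S m) Hs) as Cb.
  pose proof (averaged_resolvent_le m s Hs) as Ba. pose proof (norm_projection_le s Hs) as Bl.
  fold a b l in Ca, Cb, Ba, Bl.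
  set (ep := 4 * (lip * T) * (3/4) ^ m) in *.
  pose proof lip_nonneg. assert (Hqm : 0 <= (3/4) ^ m) by (apply pow_le; lra).
  assert (0 <= lip * T * (3/4) ^ m) by (apply Rmult_le_pos; nra).
  assert (Hep : 0 <= ep) by (unfold ep; nra).
  assert (N2 : norm (add l (opp b)) <= ep).
  { rewrite norm_sub_sym. eapply Rle_trans; [apply Cb|]. unfold ep. simpl pow. nra. }
  assert (N1 : norm (add l (opp a)) <= ep) by (rewrite norm_sub_sym; auto).
  pose proof (norm_nonneg a). pose proof (norm_nonneg l).
  pose proof (norm_nonneg (add l (opp a))). pose proof (norm_nonneg (add l (opp b))).
  pose proof (norm_nonneg (add a (opp l))).
  assert (T1 : norm (mul (add l (opp a)) l) <= ep * (K + 4 * (lip * T)))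
    by (eapply Rle_trans; [apply norm_mul | apply Rmult_le_compat; auto]).
  assert (T2 : norm (mul a (add l (opp b))) <= K * ep)
    by (eapply Rle_trans; [apply norm_mul | apply Rmult_le_compat; auto]).
  assert (T3 : norm (mul a (add a (opp l))) <= K * ep)
    by (eapply Rle_trans; [apply norm_mul | apply Rmult_le_compat; auto]).
  assert (N3 : norm (add b (opp l)) <= ep) by (rewrite norm_sub_sym; auto).
  eapply Rle_trans; [apply norm_triangle|].
  eapply Rle_trans; [apply Rplus_le_compat_r, norm_triangle|].
  eapply Rle_trans; [apply Rplus_le_compat_r, Rplus_le_compat_r, norm_triangle|].
  eapply Rle_trans; [apply Rplus_le_compat_r, Rplus_le_compat_r, Rplus_le_compat_r, norm_triangle|].
  replace (4 * (lip * T) * (K + 4 * (lip * T) + 3 * K + 1) * (3/4) ^ m)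
    with (ep * (K + 4 * (lip * T)) + K * ep + K * ep + K * ep + ep) by (unfold ep; ring).
  lra.
Qed.

Lemma projection_0_or_1 s : Cabs s <= T -> projection s = zero \/ projection s = one.
Proof.
  intro Hs. destruct (classic (projection s = zero)) as [H|H]; [left; auto|right].
  destruct (inv_spec _ H) as [_ H2].
  transitivity (mul (mul (projection s) (projection s)) (inv (projection s))).
  - rewrite <- mul_assoc, H2. symmetry. apply mul_one_r.
  - rewrite projection_idempotent; auto.
Qed.

Lemma projection_lipschitz s s' : Cabs s <= T -> Cabs s' <= T ->
  norm (add (projection s) (opp (projection s'))) <= lip * Cabs (Csub s s').
Proof.
  intros Hs Hs'.
  enough (norm (add (projection s) (opp (projection s'))) - lip * Cabs (Csub s s') <= 0) by lra.
  apply (le_cv_0 _ (8 * (lip * T)) _ cv_pow_3_4). intro m.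
  replace (add (projection s) (opp (projection s'))) with
    (add (opp (add (averaged_resolvent m s) (opp (projection s))))
         (add (add (averaged_resolvent m s) (opp (averaged_resolvent m s')))
              (add (averaged_resolvent m s') (opp (projection s'))))) by ncring.
  pose proof (norm_triangle (opp (add (averaged_resolvent m s) (opp (projection s))))
    (add (add (averaged_resolvent m s) (opp (averaged_resolvent m s')))
         (add (averaged_resolvent m s') (opp (projection s'))))).
  pose proof (norm_triangle (add (averaged_resolvent m s) (opp (averaged_resolvent m s')))
                            (add (averaged_resolvent m s') (opp (projection s')))).
  rewrite norm_opp in *.
  pose proof (projection_close s m Hs). pose proof (projection_close s' m Hs').
  pose proof (averaged_resolvent_lipschitz m s s' Hs Hs'). lra.
Qed.

Lemma averaged_resolvent_at_0 m : averaged_resolvent m Defs.C0 = one.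
Proof.
  unfold averaged_resolvent. rewrite scal_0_l.
  destruct (2 ^ m)%nat eqn:E; [exfalso; apply (Nat.pow_nonzero 2 m); lia|].
  simpl. rewrite mul_0_l, opp_zero, add_zero. apply inv_unique, mul_one_l.
Qed.

Lemma projection_at_0 : projection Defs.C0 = one.
Proof.
  symmetry. apply sub_eq_0, (geometric_zero B _ (4 * (lip * T))). intro m.
  rewrite <- (averaged_resolvent_at_0 m). apply projection_close. rewrite Cabs_C0. lra.
Qed.

(* For [|s| = T] large, [(1 - (sx)^N)^-1 = -(sx)^-N (1 - (sx)^-N)^-1] is small. *)
Lemma averaged_resolvent_far m : 2 * norm (inv x) <= T ->
  norm (averaged_resolvent m (T, 0)) <= norm (one : B) * (1/2) ^ m.
Proof.
  intro HTx.
  assert (Hx0 : x <> zero) by (intro E; apply (not_scalar Defs.C0); rewrite scal_0_l; auto).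
  destruct (inv_spec x Hx0) as [Hxix Hxxi].
  assert (HN : (S m <= 2 ^ m)%nat) by (clear; induction m; simpl; lia).
  set (N := (2 ^ m)%nat) in *. set (W := averaged_resolvent m (T, 0)).
  assert (Hbound := norm_inv_one_sub_scal_le B W (power x N) (power (inv x) N)
                      (Coquelicot.Complex.Cpow (T, 0) N)).
  rewrite Cabs_Cmod, Coquelicot.Complex.Cmod_pow, <- Cabs_Cmod, Cabs_real, Rabs_right in Hbound
    by lra.
  specialize (Hbound ltac:(unfold W, averaged_resolvent; fold N; rewrite <- power_scal;
    apply inv_spec, avoids_one_power, avoids_one_scal) (power_inv x (inv x) N Hxxi Hxix)).
  assert (HXi : norm (power (inv x) N) <= T ^ N * (1/2) ^ N).
  { rewrite <- Rpow_mult_distr. destruct N as [|k]; [lia|].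
    eapply Rle_trans; [apply norm_power|]. apply pow_incr. split; [apply norm_nonneg | lra]. }
  assert (HTN : 0 < T ^ N) by (apply pow_lt; auto).
  assert (Hr : (1/2) ^ N <= 1/2 * (1/2) ^ m).
  { replace N with (S m + (N - S m))%nat by lia. rewrite pow_add. simpl pow.
    assert (0 <= (1/2) ^ m) by (apply pow_le; lra).
    assert ((1/2) ^ (N - S m) <= 1)
      by (apply Rle_trans with (1 ^ (N - S m)); [apply pow_incr | rewrite pow1]; lra).
    nra. }
  assert (0 <= (1/2) ^ N) by (apply pow_le; lra).
  pose proof (norm_nonneg W). pose proof (norm_nonneg (one : B)).
  assert (HWr : norm W <= (norm W + norm (one : B)) * (1/2) ^ N).
  { apply Rmult_le_reg_l with (T ^ N); auto. eapply Rle_trans; [exact Hbound|].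
    replace (T ^ N * ((norm W + norm (one : B)) * (1/2) ^ N))
      with ((norm W + norm (one : B)) * (T ^ N * (1/2) ^ N)) by ring.
    apply Rmult_le_compat_l; [lra | exact HXi]. }
  assert (0 <= (1/2) ^ m) by (apply pow_le; lra).
  assert ((1/2) ^ m <= 1) by (apply Rle_trans with (1 ^ m); [apply pow_incr | rewrite pow1]; lra).
  assert (norm W <= 2 * norm (one : B) * (1/2) ^ N) by nra. nra.
Qed.

Lemma projection_far : 2 * norm (inv x) <= T -> projection (T, 0) = zero.
Proof.
  intro HTx. assert (Hs : Cabs (T, 0) <= T) by (rewrite Cabs_real, Rabs_right; lra).
  apply (geometric_zero B _ (norm (one : B) + 4 * (lip * T))). intro m.
  pose proof (averaged_resolvent_far m HTx) as Hf. pose proof (projection_close _ m Hs) as Hc.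
  assert (Hp : (1/2) ^ m <= (3/4) ^ m) by (apply pow_incr; lra).
  pose proof (norm_nonneg (one : B)). pose proof lip_nonneg.
  assert (0 <= (3/4) ^ m) by (apply pow_le; lra).
  replace (projection (T, 0)) with (add (averaged_resolvent m (T, 0))
    (opp (add (averaged_resolvent m (T, 0)) (opp (projection (T, 0)))))) by ncring.
  eapply Rle_trans; [apply norm_sub_le|].
  assert (norm (one : B) * (1/2) ^ m <= norm (one : B) * (3/4) ^ m) by (apply Rmult_le_compat_l; auto).
  nra.
Qed.

End Bounds.

Lemma non_scalar_absurd : False.
Proof.
  set (T := 2 * norm (inv x) + 1).
  assert (HT : 0 < T) by (unfold T; pose proof (norm_nonneg (inv x)); lra).
  destruct (resolvent_bounded T HT) as [K [_ HK]].
  assert (Hdisc : forall t, 0 <= t <= T -> Cabs (t, 0) <= T)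
    by (intros t Ht; rewrite Cabs_real, Rabs_right; lra).
  apply one_neq_0. rewrite <- (projection_far T K HT HK) by (unfold T; lra).
  symmetry. apply (two_valued_lipschitz B (fun t => projection T K (t, 0)) one zero T (lip K));
    auto; try lra.
  - apply lip_nonneg with T; auto.
  - intros t Ht. destruct (projection_0_or_1 T K HT HK (t, 0)); auto.
  - intros t t' Ht Ht'. rewrite <- Cabs_Csub_real. apply projection_lipschitz; auto.
  - exact (projection_at_0 T K HT HK).
Qed.

End NonScalar.

Theorem gelfand_mazur (x : B) : exists a, x = scal a one.
Proof. apply NNPP. intro H. apply (non_scalar_absurd x). intros a E. apply H. exists a. exact E. Qed.

End DivisionAlgebra.

(** * Dimension of the socle *)

Lemma minimal_idempotent_corner_scalar (A : CBanachAlgebra) (e b : A) :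
  minimal_idempotent A e -> mul e b = b -> mul b e = b -> exists a, b = scal a e.
Proof.
  intros He Heb Hbe. pose proof He as [Hee [He0 _]].
  destruct (gelfand_mazur (corner A e Hee)) with (x := exist (in_corner A e) b (conj Heb Hbe)) as [a Ha].
  - intro E. apply He0. exact (f_equal (@proj1_sig _ _) E).
  - intros [c [Hec Hce]] Hc0.
    destruct (minimal_idempotent_corner_inv A e He c Hec Hce) as [d [Hed [Hde [Hdc Hcd]]]].
    { intro E. apply Hc0. apply corner_eq. exact E. }
    exists (exist (in_corner A e) d (conj Hed Hde)). split; apply corner_eq; assumption.
  - exists a. exact (f_equal (@proj1_sig _ _) Ha).
Qed.

Section SocleDimension.
Variable A : CBanachAlgebra.
Hypothesis hSP : semiprime A.
Implicit Types (x y z u v w e f g : A).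

Lemma corner_pairing e e' u : minimal_idempotent A e -> minimal_idempotent A e' ->
  mul e u = u -> mul u e' = u -> u <> zero ->
  exists v lam kap, mul v e = v /\ mul u v = scal lam e /\ mul v u = scal kap e' /\
                    lam <> Defs.C0 /\ kap <> Defs.C0.
Proof.
  intros He He' Hue Hue' Hu0. pose proof He as [Hee _]. pose proof He' as [Hee' _].
  assert (exists a, mul (mul u a) u <> zero) as [a Ha].
  { apply NNPP. intro H. apply Hu0, hSP. intro a. apply NNPP. intro H'. apply H. eauto. }
  set (v := mul (mul e' a) e).
  assert (Huvu : mul (mul u v) u = mul (mul u a) u).
  { unfold v. transitivity (mul (mul (mul u e') a) (mul e u)); [ncring|]. rewrite Hue', Hue; auto. }
  destruct (minimal_idempotent_corner_scalar A e (mul u v) He) as [lam Hlam].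
  { rewrite mul_assoc, Hue; auto. }
  { unfold v. rewrite <- !mul_assoc, Hee; auto. }
  destruct (minimal_idempotent_corner_scalar A e' (mul v u) He') as [kap Hkap].
  { unfold v. rewrite !mul_assoc, Hee'; auto. }
  { rewrite <- mul_assoc, Hue'; auto. }
  exists v, lam, kap. repeat split; auto.
  - unfold v. rewrite <- !mul_assoc, Hee; auto.
  - intro E. apply Ha. rewrite <- Huvu, Hlam, E, scal_0_l. apply mul_0_l.
  - intro E. apply Ha. rewrite <- Huvu, <- mul_assoc, Hkap, E, scal_0_l. apply mul_0_r.
Qed.

Lemma corner_dim_le_1 e e' : minimal_idempotent A e -> minimal_idempotent A e' ->
  exists u, mul u e' = u /\ forall a, exists c, mul (mul e a) e' = scal c u.
Proof.
  intros He He'. pose proof He as [Hee _]. pose proof He' as [Hee' _].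
  destruct (classic (forall a, mul (mul e a) e' = zero)) as [Hz|Hz].
  { exists zero. split; [apply mul_0_l|]. intro a. exists Defs.C0. rewrite Hz. symmetry; apply scal_0_r. }
  apply not_all_ex_not in Hz. destruct Hz as [a0 Hu0].
  set (u := mul (mul e a0) e') in *.
  assert (Hue' : mul u e' = u) by (unfold u; rewrite <- !mul_assoc, Hee'; auto).
  destruct (corner_pairing e e' u He He') as [v [lam [kap [Hve [Hlam [Hkap [Hl0 Hk0]]]]]]]; auto.
  { unfold u. rewrite !mul_assoc, Hee; auto. }
  exists u. split; auto. intro a.
  set (t := mul (mul e a) e').
  assert (Hte' : mul t e' = t) by (unfold t; rewrite <- !mul_assoc, Hee'; auto).
  destruct (minimal_idempotent_corner_scalar A e (mul t v) He) as [mu Hmu].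
  { unfold t. rewrite !mul_assoc, Hee; auto. }
  { rewrite <- mul_assoc, Hve; auto. }
  set (q := Cmul mu (Coquelicot.Complex.Cinv lam)).
  exists q. apply sub_eq_0, (scal_eq_0 A kap); auto.
  (* [kap (t - q u) = (t - q u) v u], and [(t - q u) v = mu e - q lam e = 0] *)
  transitivity (mul (mul (add t (opp (scal q u))) v) u).
  - rewrite <- mul_assoc, Hkap, mul_scal_r, mul_add_l, Hte'. f_equal. f_equal.
    rewrite <- scal_m1, mul_scal_l, mul_scal_l, Hue'. reflexivity.
  - replace (mul (add t (opp (scal q u))) v) with (add (mul t v) (opp (scal q (mul u v))))
      by (rewrite <- mul_scal_l; ncring).
    rewrite Hmu, Hlam, scal_assoc. unfold q. rewrite Cmul_Cinv_cancel by exact Hl0.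
    rewrite add_opp. apply mul_0_l.
Qed.

Lemma soc_idempotent_decomposition x : soc A x ->
  exists n (y e : nat -> A), x = vsum A y n /\
    forall i, (i < n)%nat -> minimal_idempotent A (e i) /\ mul (y i) (e i) = y i.
Proof.
  intros [n [v [Hv ->]]]. exists n, v.
  destruct (choice (fun i e => (i < n)%nat -> minimal_idempotent A e /\ mul (v i) e = v i))
    as [e He]; [|exists e; split; auto].
  intro i. destruct (Nat.lt_ge_cases i n) as [Hi|Hi]; [|exists zero; intro; lia].
  destruct (Hv i Hi) as [L [HL HLv]].
  destruct (minimal_left_ideal_idempotent A L hSP HL) as [e [HMI [_ HLe]]].
  exists e. auto.
Qed.

Lemma vsum_double (F : nat -> nat -> A) n m :
  vsum A (fun k => F (k / m)%nat (k mod m)%nat) (n * m) = vsum A (fun i => vsum A (F i) m) n.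
Proof.
  induction n; auto.
  rewrite Nat.mul_succ_l, vsum_split, IHn. simpl. f_equal. apply vsum_ext. intros j Hj.
  f_equal; [symmetry; apply (Nat.div_unique _ _ _ j) | symmetry; apply (Nat.mod_unique _ _ n j)];
    auto; lia.
Qed.

(* If [w = f w g] on the socle with [f], [g] in the socle, then writing [f = sum y_i], [g = sum y'_j]
   with [y_i e_i = y_i], [y'_j e'_j = y'_j], every [w] lies in the span of the [y_i e_i A e'_j]. *)
Lemma soc_finite_dimensional_of_units f g : soc A f -> soc A g ->
  (forall w, soc A w -> w = mul (mul f w) g) -> finite_dimensional A (soc A).
Proof.
  intros Hf Hg Hw.
  destruct (soc_idempotent_decomposition f Hf) as [n [y [e [-> He]]]].
  destruct (soc_idempotent_decomposition g Hg) as [m [y' [e' [-> He']]]].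
  destruct (choice (fun (ij : nat * nat) (uc : A * (A -> Defs.C)) =>
      (fst ij < n)%nat -> (snd ij < m)%nat -> mul (fst uc) (e' (snd ij)) = fst uc /\
      forall a, mul (mul (e (fst ij)) a) (e' (snd ij)) = scal (snd uc a) (fst uc))) as [uc Huc].
  { intros [i j]. simpl.
    destruct (Nat.lt_ge_cases i n) as [Hi|Hi]; [|exists (zero, fun _ => Defs.C0); intros; lia].
    destruct (Nat.lt_ge_cases j m) as [Hj|Hj]; [|exists (zero, fun _ => Defs.C0); intros; lia].
    destruct (corner_dim_le_1 (e i) (e' j) (proj1 (He i Hi)) (proj1 (He' j Hj))) as [u [Hu Hc]].
    destruct (choice _ Hc) as [c Hc']. exists (u, c). auto. }
  set (u i j := fst (uc (i, j))). set (c i j := snd (uc (i, j))).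
  exists (n * m)%nat, (fun k => mul (y (k / m)%nat) (u (k / m)%nat (k mod m)%nat)). split.
  - intros k Hk. assert (Hj : (k mod m < m)%nat) by (apply Nat.mod_upper_bound; lia).
    assert (Hi : (k / m < n)%nat) by (apply Nat.Div0.div_lt_upper_bound; lia).
    destruct (Huc (k / m, k mod m)%nat Hi Hj) as [Hu _]. destruct (He' _ Hj) as [HM' _].
    apply (soc_minimal A (fun z => mul z (e' (k mod m)%nat) = z)); [apply HM'|].
    simpl. rewrite <- mul_assoc. f_equal. exact Hu.
  - intros w Hw'.
    exists (fun k => c (k / m)%nat (k mod m)%nat (mul w (y' (k mod m)%nat))).
    rewrite (vsum_double (fun i j => scal (c i j (mul w (y' j))) (mul (y i) (u i j)))).
    rewrite (Hw w Hw') at 1. rewrite <- mul_assoc, mul_vsum_r. apply vsum_ext. intros i Hi.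
    rewrite !mul_vsum_l. apply vsum_ext. intros j Hj.
    destruct (Huc (i, j) Hi Hj) as [_ Hc]. simpl in Hc.
    destruct (He i Hi) as [_ Hyi]. destruct (He' j Hj) as [_ Hyj].
    rewrite <- mul_scal_r. unfold c, u. rewrite <- Hc.
    rewrite <- Hyi at 1. rewrite <- Hyj at 1. ncring.
Qed.

Lemma soc_unit_of_finite_dimensional : finite_dimensional A (soc A) ->
  exists u, soc A u /\ forall z, soc A z -> mul u z = z /\ mul z u = z.
Proof.
  intros [n [v [Hv Hspan]]].
  destruct (soc_common_right_unit A hSP n v Hv) as [f [Hf Hvf]].
  destruct (soc_common_left_unit A n v hSP Hv) as [g [Hg Hgv]].
  assert (Hspan_mul : forall a b, (forall i, (i < n)%nat -> mul a (v i) = v i /\ mul (v i) b = v i) ->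
                        forall z, soc A z -> mul a z = z /\ mul z b = z).
  { intros a b Hab z Hz. destruct (Hspan z Hz) as [cz ->].
    rewrite mul_vsum_l, mul_vsum_r. split; apply vsum_ext; intros i Hi;
      [rewrite mul_scal_r | rewrite mul_scal_l]; f_equal; apply Hab; auto. }
  exists (add (add f g) (opp (mul f g))). split.
  - apply soc_sub; [apply soc_add | apply soc_mul]; auto.
  - intros z Hz. destruct (Hspan_mul g f (fun i Hi => conj (Hgv i Hi) (Hvf i Hi)) z Hz) as [Hgz Hzf].
    split.
    + transitivity (add (add (mul f z) (mul g z)) (opp (mul f (mul g z)))); [ncring|].
      rewrite Hgz. ncring.
    + transitivity (add (add (mul z f) (mul z g)) (opp (mul (mul z f) g))); [ncring|].
      rewrite Hzf. ncring.
Qed.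

Lemma soc_unit_not_tdz u : (forall z, soc A z -> mul u z = z /\ mul z u = z) ->
  ~ topological_divisor_of_zero_in A (soc A) u.
Proof.
  intros Hu [zs [Hzs [Hn1 Hcv]]].
  destruct Hcv as [Hcv|Hcv]; destruct (Hcv (1/2)) as [N HN]; try lra;
    specialize (HN N (le_n N)); unfold R_dist in HN;
    [rewrite (proj1 (Hu _ (Hzs N))) in HN | rewrite (proj2 (Hu _ (Hzs N))) in HN];
    rewrite Hn1, Rminus_0_r, Rabs_R1 in HN; lra.
Qed.

Lemma tdz_of_annihilator x z : soc A z -> z <> zero -> (mul x z = zero \/ mul z x = zero) ->
  topological_divisor_of_zero_in A (soc A) x.
Proof.
  intros Hz Hz0 Hann. set (z1 := scal (/ norm z, 0) z).
  assert (Hnz := norm_pos z Hz0).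
  exists (fun _ => z1). split; [|split].
  - intros _. apply soc_scal; auto.
  - intros _. unfold z1. rewrite norm_scal, Cabs_real, Rabs_right; [field; lra|].
    apply Rle_ge. left. apply Rinv_0_lt_compat; auto.
  - assert (Hcv0 : Un_cv (fun _ : nat => norm (zero : A)) 0).
    { rewrite norm_zero. intros eps Heps. exists O. intros. unfold R_dist. rewrite Rminus_0_r, Rabs_R0; auto. }
    destruct Hann as [H|H]; [left|right]; unfold z1;
      [rewrite mul_scal_r, H, scal_0_r | rewrite mul_scal_l, H, scal_0_r]; exact Hcv0.
Qed.

Lemma soc_tdz_of_infinite_dimensional x : infinite_dimensional A (soc A) -> soc A x ->
  topological_divisor_of_zero_in A (soc A) x.
Proof.
  intros Hinf Hx.
  destruct (soc_common_right_unit A hSP 1 (fun _ => x)) as [f [Hf Hxf]]; auto.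
  destruct (soc_common_left_unit A 1 (fun _ => x) hSP) as [g [Hg Hgx]]; auto.
  specialize (Hxf O ltac:(lia)). specialize (Hgx O ltac:(lia)). simpl in Hxf, Hgx.
  destruct (classic (exists w, soc A w /\ add w (opp (mul f w)) <> zero)) as [[w [Hw Hd]]|H1].
  { apply (tdz_of_annihilator x (add w (opp (mul f w)))); auto.
    - apply soc_sub, soc_mul; auto.
    - left. transitivity (add (mul x w) (opp (mul (mul x f) w))); [ncring|].
      rewrite Hxf. apply add_opp. }
  destruct (classic (exists w, soc A w /\ add w (opp (mul w g)) <> zero)) as [[w [Hw Hd]]|H2].
  { apply (tdz_of_annihilator x (add w (opp (mul w g)))); auto.
    - apply soc_sub; auto. apply soc_mul_r; auto.
    - right. transitivity (add (mul w x) (opp (mul w (mul g x)))); [ncring|].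
      rewrite Hgx. apply add_opp. }
  exfalso. apply Hinf, (soc_finite_dimensional_of_units f g Hf Hg).
  intros w Hw.
  assert (E1 : mul f w = w).
  { symmetry. apply sub_eq_0, NNPP. intro H. apply H1. eauto. }
  assert (E2 : mul w g = w).
  { symmetry. apply sub_eq_0, NNPP. intro H. apply H2. eauto. }
  rewrite E1, E2. reflexivity.
Qed.

End SocleDimension.

Theorem theorem1p9 (A : CBanachAlgebra) (hA : semisimple A) :
  infinite_dimensional A (soc A) <->
  (forall x : A, soc A x -> topological_divisor_of_zero_in A (soc A) x).
Proof.
  pose proof (semisimple_semiprime A hA) as hSP. split.
  - intros Hinf x Hx. exact (soc_tdz_of_infinite_dimensional A hSP x Hinf Hx).
  - intros Htdz Hfd.
    destruct (soc_unit_of_finite_dimensional A hSP Hfd) as [u [Hu Hunit]].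
    exact (soc_unit_not_tdz A u Hunit (Htdz u Hu)).
Qed.
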